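(* For the space $\mathcal W$ defined below, $|\mathfrak P^\omega(\mathcal W)|=c$.
   Context: Identify $\mathbb R^2$ with $\mathbb C$. $\mathcal W=\{\tfrac1{2^{n+1}}e^{2\pi i\theta}+\tfrac1n+\tfrac{i}{2^{n+1}}:n\in\mathbb N,\theta\in[0,1]\}\cup[0,1]$, base point $0$. $c=|\mathbb R|$. An $\omega$-loop at $0$ is a continuous $k:[0,1]\to\mathcal W$ with $k(0)=k(1)=0$ all of whose fibres are finite; $\mathfrak P^\omega(\mathcal W)$ is the subgroup of $\pi_1(\mathcal W,0)$ generated by homotopy classes (rel endpoints) of $\omega$-loops at $0$. *)

(* classical reals. R^2 = C is modelled as R * R. *)
From Stdlib Require Import Reals List.
Open Scope R_scope.

Definition pt := (R * R)%type.

Definition dist2 (p q : pt) : R :=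
  sqrt ((fst p - fst q) ^ 2 + (snd p - snd q) ^ 2).

Definition origin : pt := (0, 0).

(* The space W: circles of radius 1/2^(n+1) centred at 1/n + i/2^(n+1)
   (n >= 1), together with the segment [0,1] on the real axis. *)
Definition W (z : pt) : Prop :=
  (exists (n : nat) (theta : R), (1 <= n)%nat /\ 0 <= theta <= 1 /\
     fst z = cos (2 * PI * theta) / 2 ^ (S n) + / INR n /\
     snd z = sin (2 * PI * theta) / 2 ^ (S n) + / 2 ^ (S n))
  \/ (snd z = 0 /\ 0 <= fst z <= 1).

Definition unit_I (t : R) : Prop := 0 <= t <= 1.

Definition cont_on_I (k : R -> pt) : Prop :=
  forall t, unit_I t -> forall eps, eps > 0 -> exists delta, delta > 0 /\
    forall s, unit_I s -> Rabs (s - t) < delta -> dist2 (k s) (k t) < eps.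

(* a loop in W based at 0 (only its values on [0,1] matter) *)
Definition loopW (k : R -> pt) : Prop :=
  cont_on_I k /\ (forall t, unit_I t -> W (k t)) /\
  k 0 = origin /\ k 1 = origin.

Definition finite_fibres (k : R -> pt) : Prop :=
  forall p : pt, exists l : list R, forall t, unit_I t -> k t = p -> In t l.

Definition omega_loop (k : R -> pt) : Prop := loopW k /\ finite_fibres k.

Definition homotopic (k1 k2 : R -> pt) : Prop :=
  exists H : R -> R -> pt,
    (forall s t, unit_I s -> unit_I t -> forall eps, eps > 0 ->
       exists delta, delta > 0 /\ forall s' t', unit_I s' -> unit_I t' ->
         dist2 (s', t') (s, t) < delta -> dist2 (H s' t') (H s t) < eps) /\
    (forall s t, unit_I s -> unit_I t -> W (H s t)) /\
    (forall t, unit_I t -> H 0 t = k1 t) /\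
    (forall t, unit_I t -> H 1 t = k2 t) /\
    (forall s, unit_I s -> H s 0 = origin /\ H s 1 = origin).

Definition const_loop : R -> pt := fun _ => origin.
Definition concat (k1 k2 : R -> pt) : R -> pt :=
  fun t => if Rle_dec t (/ 2) then k1 (2 * t) else k2 (2 * t - 1).
Definition reverse (k : R -> pt) : R -> pt := fun t => k (1 - t).

(* Loops whose homotopy class lies in P^omega(W): the smallest set of loops
   containing the omega-loops and the constant loop, closed under
   concatenation, reversal and homotopy rel endpoints, i.e. the union of the
   classes in the subgroup of pi_1(W,0) generated by classes of omega-loops. *)
Inductive in_Pomega : (R -> pt) -> Prop :=
  | Pom_gen : forall k, omega_loop k -> in_Pomega k
  | Pom_one : in_Pomega const_loop
  | Pom_mul : forall k1 k2, in_Pomega k1 -> in_Pomega k2 ->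
                in_Pomega (concat k1 k2)
  | Pom_inv : forall k, in_Pomega k -> in_Pomega (reverse k)
  | Pom_hom : forall k1 k2, in_Pomega k1 -> loopW k2 -> homotopic k1 k2 ->
                in_Pomega k2.

From Pilot Require Import Defs.
From Stdlib Require Import Reals List.
From Stdlib Require Import Lra Lia ClassicalEpsilon ZArith Cantor.
Open Scope R_scope.

(* The loop [detour_loop A], for a set [A] of indices [n >= 8], runs out along the segment,
   going once around the n-th circle exactly when [n] is in [A], and comes back; its fibres are
   finite.  Collapsing W onto its n-th circle (everything else goes to the contact point [1/n])
   is uniformly continuous on W.  So a homotopy between two such loops gives, on a fine grid of
   the square, a column of closed polygons on the unit circle, consecutive ones pointwise close;
   their total turning angle is then the same for all of them.  For the loop of [A] this angle
   is [2 PI] or [0] according to whether [n] is in [A], so the loops of the Dedekind cuts of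
   the reals are pairwise non-homotopic.
   Conversely, a loop is continuous, hence determined by the countably many bits
   "q < coordinate of k q'" for rationals q, q', which a ternary expansion encodes in a real. *)

Lemma Rabs_lt_between x e : Rabs x < e <-> - e < x < e.
Proof. split; intros H. apply Rabs_def2 in H; lra. apply Rabs_def1; lra. Qed.

Lemma Rabs_le_between x e : Rabs x <= e <-> - e <= x <= e.
Proof. destruct (Rcase_abs x); [rewrite Rabs_left|rewrite Rabs_right]; lra. Qed.

Lemma Rdiv_le_0_compat a b : 0 <= a -> 0 < b -> 0 <= a / b.
Proof. intros. unfold Rdiv. apply Rmult_le_pos; auto. left. apply Rinv_0_lt_compat; auto. Qed.

Lemma pow2_pos k : 0 < 2 ^ k.
Proof. apply pow_lt; lra. Qed.

Lemma INR_ge1 m : (1 <= m)%nat -> 1 <= INR m.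
Proof. intros H. apply (le_INR 1) in H. exact H. Qed.

Lemma Rinv_INR_le1 n : (1 <= n)%nat -> / INR n <= 1.
Proof. intros Hn. rewrite <- Rinv_1. apply Rinv_le_contravar; [lra|apply INR_ge1; auto]. Qed.

Lemma INR_le_pow2 n : INR n <= 2 ^ n.
Proof.
  induction n as [|n IH]; [simpl; lra|]. rewrite S_INR. simpl pow.
  assert (1 <= 2 ^ n) by (apply pow_R1_Rle; lra). lra.
Qed.

Lemma archimed_nat K : exists N : nat, (1 <= N)%nat /\ K < INR N.
Proof.
  destruct (archimed (Rabs K)) as [A1 _].
  assert (Hz : (0 <= up (Rabs K))%Z) by (apply le_IZR; pose proof (Rabs_pos K); lra).
  exists (S (Z.to_nat (up (Rabs K)))). split; [lia|].
  rewrite S_INR, INR_IZR_INZ, Z2Nat.id by auto. pose proof (Rle_abs K). lra.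
Qed.

Lemma dist2_ge0 p q : 0 <= dist2 p q.
Proof. apply sqrt_pos. Qed.

Lemma dist2_refl p : dist2 p p = 0.
Proof.
  unfold dist2. rewrite !Rminus_diag. replace (0 ^ 2 + 0 ^ 2) with 0 by ring. apply sqrt_0.
Qed.

Lemma dist2_sym p q : dist2 p q = dist2 q p.
Proof. unfold dist2. f_equal. ring. Qed.

Lemma dist2_sq p q : dist2 p q * dist2 p q = (fst p - fst q) ^ 2 + (snd p - snd q) ^ 2.
Proof.
  apply sqrt_sqrt.
  pose proof (pow2_ge_0 (fst p - fst q)); pose proof (pow2_ge_0 (snd p - snd q)); lra.
Qed.

Lemma dist2_le_abs p q : dist2 p q <= Rabs (fst p - fst q) + Rabs (snd p - snd q).
Proof.
  pose proof (dist2_sq p q). pose proof (dist2_ge0 p q).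
  pose proof (Rabs_pos (fst p - fst q)); pose proof (Rabs_pos (snd p - snd q)).
  rewrite <- (pow2_abs (fst p - fst q)), <- (pow2_abs (snd p - snd q)) in H.
  nra.
Qed.

Lemma dist2_ge_abs_fst p q : Rabs (fst p - fst q) <= dist2 p q.
Proof.
  unfold dist2. rewrite <- sqrt_Rsqr_abs. apply sqrt_le_1_alt. unfold Rsqr.
  pose proof (pow2_ge_0 (snd p - snd q)). nra.
Qed.

Lemma dist2_ge_abs_snd p q : Rabs (snd p - snd q) <= dist2 p q.
Proof.
  unfold dist2. rewrite <- sqrt_Rsqr_abs. apply sqrt_le_1_alt. unfold Rsqr.
  pose proof (pow2_ge_0 (fst p - fst q)). nra.
Qed.

Lemma dist2_triangle p q r : dist2 p r <= dist2 p q + dist2 q r.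
Proof.
  unfold dist2.
  replace (fst p - fst r) with ((fst p - fst q) + (fst q - fst r)) by ring.
  replace (snd p - snd r) with ((snd p - snd q) + (snd q - snd r)) by ring.
  set (a := fst p - fst q); set (b := snd p - snd q).
  set (c := fst q - fst r); set (d := snd q - snd r).
  pose proof (sqrt_cauchy a b c d) as Hcs.
  pose proof (sqrt_pos (a ^ 2 + b ^ 2)); pose proof (sqrt_pos (c ^ 2 + d ^ 2)).
  assert (Sab : sqrt (a ^ 2 + b ^ 2) * sqrt (a ^ 2 + b ^ 2) = a ^ 2 + b ^ 2)
    by (apply sqrt_sqrt; nra).
  assert (Scd : sqrt (c ^ 2 + d ^ 2) * sqrt (c ^ 2 + d ^ 2) = c ^ 2 + d ^ 2)
    by (apply sqrt_sqrt; nra).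
  unfold Rsqr in Hcs. replace (a * a + b * b) with (a ^ 2 + b ^ 2) in Hcs by ring.
  replace (c * c + d * d) with (c ^ 2 + d ^ 2) in Hcs by ring.
  rewrite <- (sqrt_Rsqr (sqrt (a ^ 2 + b ^ 2) + sqrt (c ^ 2 + d ^ 2))) by lra.
  apply sqrt_le_1_alt. unfold Rsqr. nra.
Qed.

Lemma dist2_eq0 p q : dist2 p q = 0 -> p = q.
Proof.
  intros H. pose proof (dist2_sq p q) as E. rewrite H, Rmult_0_r in E.
  pose proof (pow2_ge_0 (fst p - fst q)); pose proof (pow2_ge_0 (snd p - snd q)).
  destruct p as [a b], q as [c d]; simpl in *.
  assert (a - c = 0) by nra. assert (b - d = 0) by nra. f_equal; lra.
Qed.

Definition cont_on (a b : R) (k : R -> pt) : Prop :=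
  forall t, a <= t <= b -> forall eps, eps > 0 -> exists delta, delta > 0 /\
    forall s, a <= s <= b -> Rabs (s - t) < delta -> dist2 (k s) (k t) < eps.

Lemma cont_on_ext a b k g :
  (forall x, a <= x <= b -> k x = g x) -> cont_on a b g -> cont_on a b k.
Proof.
  intros He Hg t Ht eps Heps. destruct (Hg t Ht eps Heps) as [d [Hd H]].
  exists d; split; auto. intros s Hs Hst. rewrite !He by auto. auto.
Qed.

Lemma cont_on_paste a b c k :
  a <= b -> b <= c -> cont_on a b k -> cont_on b c k -> cont_on a c k.
Proof.
  intros Hab Hbc H1 H2 t Ht eps Heps.
  destruct (Rlt_dec t b) as [Htb|Htb]; [|destruct (Rlt_dec b t) as [Hbt|Hbt]].
  - destruct (H1 t ltac:(lra) eps Heps) as [d [Hd H]].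
    exists (Rmin d (b - t)); split; [apply Rmin_glb_lt; lra|].
    intros s Hs Hst. apply Rabs_lt_between in Hst.
    pose proof (Rmin_l d (b - t)); pose proof (Rmin_r d (b - t)).
    apply H; [lra|apply Rabs_lt_between; lra].
  - destruct (H2 t ltac:(lra) eps Heps) as [d [Hd H]].
    exists (Rmin d (t - b)); split; [apply Rmin_glb_lt; lra|].
    intros s Hs Hst. apply Rabs_lt_between in Hst.
    pose proof (Rmin_l d (t - b)); pose proof (Rmin_r d (t - b)).
    apply H; [lra|apply Rabs_lt_between; lra].
  - assert (t = b) by lra. subst t.
    destruct (H1 b ltac:(lra) eps Heps) as [d1 [Hd1 G1]].
    destruct (H2 b ltac:(lra) eps Heps) as [d2 [Hd2 G2]].
    exists (Rmin d1 d2); split; [apply Rmin_glb_lt; lra|].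
    intros s Hs Hst. pose proof (Rmin_l d1 d2); pose proof (Rmin_r d1 d2).
    destruct (Rle_dec s b); [apply G1|apply G2]; lra.
Qed.

Lemma cont_on_affine a b c d k :
  cont_on 0 1 k -> (forall t, a <= t <= b -> 0 <= c * t + d <= 1) ->
  cont_on a b (fun t => k (c * t + d)).
Proof.
  intros Hk Hr t Ht eps Heps. destruct (Hk (c * t + d) (Hr t Ht) eps Heps) as [del [Hdel H]].
  pose proof (Rabs_pos c).
  exists (del / (Rabs c + 1)). split; [apply Rdiv_lt_0_compat; lra|].
  intros s Hs Hst. apply H; [apply Hr; auto|].
  replace (c * s + d - (c * t + d)) with (c * (s - t)) by ring. rewrite Rabs_mult.
  pose proof (Rabs_pos (s - t)).
  apply (Rmult_lt_compat_r (Rabs c + 1)) in Hst; [|lra].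
  unfold Rdiv in Hst. rewrite Rmult_assoc, Rinv_l in Hst; nra.
Qed.

Lemma cont_on_pair (g1 g2 : R -> R) a b :
  (forall x, a <= x <= b -> continuity_pt g1 x) ->
  (forall x, a <= x <= b -> continuity_pt g2 x) ->
  cont_on a b (fun x => (g1 x, g2 x)).
Proof.
  intros C1 C2 t Ht eps Heps.
  destruct (C1 t Ht (eps / 2) ltac:(lra)) as [a1 [Ha1 G1]].
  destruct (C2 t Ht (eps / 2) ltac:(lra)) as [a2 [Ha2 G2]].
  exists (Rmin a1 a2); split; [apply Rmin_glb_lt; lra|].
  intros s Hs Hst. pose proof (Rmin_l a1 a2); pose proof (Rmin_r a1 a2).
  destruct (Req_dec s t) as [->|E]; [rewrite dist2_refl; lra|].
  eapply Rle_lt_trans; [apply dist2_le_abs|]. simpl.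
  assert (Rabs (g1 s - g1 t) < eps / 2).
  { apply G1. split; [split; [exact I|congruence]|simpl; unfold R_dist; lra]. }
  assert (Rabs (g2 s - g2 t) < eps / 2).
  { apply G2. split; [split; [exact I|congruence]|simpl; unfold R_dist; lra]. }
  lra.
Qed.

Lemma cont_on_const a b p : cont_on a b (fun _ => p).
Proof. intros t Ht eps Heps. exists 1. split; [lra|]. intros. rewrite dist2_refl. lra. Qed.

(** * Uniform continuity on the unit square *)

Fixpoint list_min (d : R -> R) (l : list R) : R :=
  match l with nil => 1 | x :: l' => Rmin (d x) (list_min d l') end.

Lemma list_min_pos d l : (forall x, In x l -> d x > 0) -> list_min d l > 0.
Proof.
  induction l; simpl; intros H; [lra|].
  apply Rmin_glb_lt; [apply H|apply IHl]; auto.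
Qed.

Lemma list_min_le d l x : In x l -> list_min d l <= d x.
Proof.
  induction l; simpl; intros H; [contradiction|].
  destruct H as [->|H]; [apply Rmin_l|]. eapply Rle_trans; [apply Rmin_r|auto].
Qed.

(* The Lebesgue number lemma, from Heine-Borel ([compact_P3]). *)
Lemma lebesgue_number_01 (d : R -> R) : (forall x, 0 <= x <= 1 -> d x > 0) ->
  exists e, e > 0 /\ forall y, 0 <= y <= 1 ->
    exists x, 0 <= x <= 1 /\ Rabs (y - x) < d x /\ e <= d x.
Proof.
  intros Hd.
  set (fam := mkfamily (fun x => 0 <= x <= 1)
                (fun x y => (0 <= x <= 1) /\ Rabs (y - x) < d x)
                (fun x (H : exists y, (0 <= x <= 1) /\ Rabs (y - x) < d x) =>
                   match H with ex_intro _ y Hy => proj1 Hy end)).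
  assert (Hc : covering_open_set (fun c => 0 <= c <= 1) fam).
  { split.
    - intros y Hy. exists y. simpl. rewrite Rminus_diag, Rabs_R0. split; auto. apply Hd; auto.
    - intros x y [Hx Hy].
      assert (Hp : 0 < d x - Rabs (y - x)) by lra.
      exists (mkposreal _ Hp). intros z Hz. unfold disc in Hz. simpl in *. split; auto.
      pose proof (Rabs_triang (z - y) (y - x)).
      replace (z - y + (y - x)) with (z - x) in H by ring. lra. }
  destruct (compact_P3 0 1 fam Hc) as [D [Hcov [l Hl]]].
  exists (list_min d l). split.
  - apply list_min_pos. intros x Hx. apply Hl in Hx. apply Hd, Hx.
  - intros y Hy. destruct (Hcov y Hy) as [x [[Hx1 Hx2] HD]].
    exists x. split; [|split]; auto. apply list_min_le, Hl. split; auto.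
Qed.

Lemma choice_on (P : R -> Prop) (Q : R -> R -> Prop) :
  (forall x, P x -> exists y, Q x y) -> exists f : R -> R, forall x, P x -> Q x (f x).
Proof.
  intros H. apply (choice (fun x y => P x -> Q x y)). intros x.
  destruct (classic (P x)) as [Hx|Hx]; [destruct (H x Hx) as [y Hy]; eauto|exists 0; tauto].
Qed.

Definition cont_square (H : R -> R -> pt) : Prop :=
  forall s t, unit_I s -> unit_I t -> forall eps, eps > 0 ->
    exists delta, delta > 0 /\ forall s' t', unit_I s' -> unit_I t' ->
      dist2 (s', t') (s, t) < delta -> dist2 (H s' t') (H s t) < eps.

Section UniformContinuity.

Variable H : R -> R -> pt.
Hypothesis H_cont : cont_square H.

Lemma cont_square_unif_near eps : eps > 0 -> forall s0, unit_I s0 ->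
  exists del, del > 0 /\ forall s s' t t', unit_I s -> unit_I s' -> unit_I t -> unit_I t' ->
    Rabs (s - s0) < del -> Rabs (s' - s0) < del -> Rabs (t - t') < del ->
    dist2 (H s t) (H s' t') < eps.
Proof.
  intros Heps s0 Hs0.
  destruct (choice_on (fun t0 => 0 <= t0 <= 1) (fun t0 d => d > 0 /\
      forall s' t', unit_I s' -> unit_I t' ->
        dist2 (s', t') (s0, t0) < d -> dist2 (H s' t') (H s0 t0) < eps / 2)) as [f Hf].
  { intros t0 Ht0. apply (H_cont s0 t0 Hs0 Ht0 (eps / 2)). lra. }
  destruct (lebesgue_number_01 (fun x => f x / 4)) as [e [He Hcov]].
  { intros x Hx. destruct (Hf x Hx). lra. }
  exists e. split; auto. intros s s' t t' Hs Hs' Ht Ht' H1 H2 H3.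
  destruct (Hcov t Ht) as [x [Hx [Hx1 Hx2]]]. destruct (Hf x Hx) as [Hfx G].
  apply Rabs_lt_between in H1, H2, H3, Hx1.
  assert (A1 : dist2 (H s t) (H s0 x) < eps / 2).
  { apply G; auto. eapply Rle_lt_trans; [apply dist2_le_abs|]. simpl.
    assert (Rabs (s - s0) < f x / 4) by (apply Rabs_lt_between; lra).
    assert (Rabs (t - x) < f x / 4) by (apply Rabs_lt_between; lra). lra. }
  assert (A2 : dist2 (H s' t') (H s0 x) < eps / 2).
  { apply G; auto. eapply Rle_lt_trans; [apply dist2_le_abs|]. simpl.
    assert (Rabs (s' - s0) < f x / 4) by (apply Rabs_lt_between; lra).
    assert (Rabs (t' - x) < f x / 2) by (apply Rabs_lt_between; lra). lra. }
  eapply Rle_lt_trans; [apply (dist2_triangle _ (H s0 x))|]. rewrite (dist2_sym (H s0 x)). lra.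
Qed.

Lemma cont_square_unif eps : eps > 0 -> exists del, del > 0 /\
  forall s t s' t', unit_I s -> unit_I t -> unit_I s' -> unit_I t' ->
    Rabs (s - s') < del -> Rabs (t - t') < del -> dist2 (H s t) (H s' t') < eps.
Proof.
  intros Heps.
  destruct (choice_on (fun s0 => 0 <= s0 <= 1) (fun s0 del => del > 0 /\
      forall s s' t t', unit_I s -> unit_I s' -> unit_I t -> unit_I t' ->
        Rabs (s - s0) < del -> Rabs (s' - s0) < del -> Rabs (t - t') < del ->
        dist2 (H s t) (H s' t') < eps)) as [f Hf].
  { intros s0 Hs0. apply cont_square_unif_near; auto. }
  destruct (lebesgue_number_01 (fun x => f x / 2)) as [e [He Hcov]].
  { intros x Hx. destruct (Hf x Hx). lra. }
  exists e. split; auto. intros s t s' t' Hs Ht Hs' Ht' H1 H2.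
  destruct (Hcov s Hs) as [x [Hx [Hx1 Hx2]]]. destruct (Hf x Hx) as [Hfx G].
  apply Rabs_lt_between in H1, Hx1.
  apply G; auto; try (apply Rabs_lt_between; lra); lra.
Qed.

End UniformContinuity.

(** * Angles on the unit circle *)

Fixpoint rsum (f : nat -> R) (N : nat) : R :=
  match N with O => 0 | S k => rsum f k + f k end.

Lemma rsum_ext f g N : (forall i, (i < N)%nat -> f i = g i) -> rsum f N = rsum g N.
Proof.
  induction N; simpl; intros H; auto.
  rewrite IHN, H; auto.
Qed.

Lemma rsum_minus f g N : rsum (fun i => f i - g i) N = rsum f N - rsum g N.
Proof. induction N; simpl; [ring|]. rewrite IHN. ring. Qed.

Lemma rsum_telescope f g N :
  (forall i, (i < N)%nat -> f i = g (S i) - g i) -> rsum f N = g N - g O.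
Proof.
  induction N; simpl; intros H; [ring|].
  rewrite IHN, H; [ring|lia|]. intros i Hi. apply H. lia.
Qed.

Definition cmul (a b : pt) : pt :=
  (fst a * fst b - snd a * snd b, fst a * snd b + snd a * fst b).
Definition cconj (a : pt) : pt := (fst a, - snd a).
Definition on_circle (a : pt) : Prop := fst a ^ 2 + snd a ^ 2 = 1.
Definition expi (x : R) : pt := (cos x, sin x).
(* The argument of [w], correct only in the right half-plane [fst w > 0]. *)
Definition arg (w : pt) : R := atan (snd w / fst w).

Lemma on_circle_cmul a b : on_circle a -> on_circle b -> on_circle (cmul a b).
Proof.
  unfold on_circle, cmul; cbn [fst snd]; intros Ha Hb.
  replace ((fst a * fst b - snd a * snd b) ^ 2 + (fst a * snd b + snd a * fst b) ^ 2)
    with ((fst a ^ 2 + snd a ^ 2) * (fst b ^ 2 + snd b ^ 2)) by ring.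
  rewrite Ha, Hb. ring.
Qed.

Lemma on_circle_cconj a : on_circle a -> on_circle (cconj a).
Proof. unfold on_circle, cconj; cbn [fst snd]. intros H. rewrite <- H. ring. Qed.

Lemma cmul_comm a b : cmul a b = cmul b a.
Proof. unfold cmul. f_equal; ring. Qed.

Lemma cmul_expi a b : cmul (expi a) (expi b) = expi (a + b).
Proof. unfold cmul, expi; simpl. rewrite cos_plus, sin_plus. f_equal; ring. Qed.

Lemma cconj_expi x : cconj (expi x) = expi (- x).
Proof. unfold cconj, expi; simpl. rewrite cos_neg, sin_neg. auto. Qed.

Lemma cconj_cmul_cconj a b : cconj (cmul a (cconj b)) = cmul b (cconj a).
Proof. unfold cconj, cmul; simpl. f_equal; ring. Qed.

Lemma cmul_cconj_cancel x y b :
  on_circle b -> cmul (cmul x (cconj b)) (cmul b y) = cmul x y.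
Proof.
  unfold on_circle, cmul, cconj; cbn [fst snd]; intros H.
  f_equal; [transitivity ((fst b ^ 2 + snd b ^ 2) * (fst x * fst y - snd x * snd y))
           |transitivity ((fst b ^ 2 + snd b ^ 2) * (fst x * snd y + snd x * fst y))];
  try ring; rewrite H; ring.
Qed.

Lemma arg_expi x : - (PI / 2) < x < PI / 2 -> arg (expi x) = x.
Proof. intros H. unfold arg, expi; simpl. fold (tan x). apply atan_tan; auto. Qed.

Lemma expi_arg w : on_circle w -> fst w > 0 -> w = expi (arg w).
Proof.
  intros Hu Hp. unfold arg, expi. rewrite cos_atan, sin_atan.
  destruct w as [a b]; unfold on_circle in Hu; cbn [fst snd] in *.
  assert (E : 1 + (b / a)² = / (a * a)).
  { unfold Rsqr. replace (1 + b / a * (b / a)) with ((a ^ 2 + b ^ 2) / (a * a)) by (field; lra).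
    rewrite Hu. field; lra. }
  rewrite E, sqrt_inv, sqrt_square by lra. f_equal; field; lra.
Qed.

Lemma arg_cmul_cconj_self a : on_circle a -> arg (cmul a (cconj a)) = 0.
Proof.
  unfold arg, cmul, cconj; simpl; intros _.
  replace (fst a * - snd a + snd a * fst a) with 0 by ring.
  unfold Rdiv. rewrite Rmult_0_l. apply atan_0.
Qed.

Lemma atan_lt_PI6 x : Rabs x < 1 / 2 -> Rabs (atan x) < PI / 6.
Proof.
  intros H. apply Rabs_lt_between in H.
  assert (S3 : 1 / 2 < 1 / sqrt 3).
  { assert (sqrt 3 < 2) by (rewrite <- (sqrt_square 2) by lra; apply sqrt_lt_1_alt; lra).
    assert (0 < sqrt 3) by (apply sqrt_lt_R0; lra).
    apply Rmult_lt_reg_r with (2 * sqrt 3); [nra|]. field_simplify; lra. }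
  pose proof PI6_RGT_0. pose proof PI6_RLT_PI2.
  assert (E : atan (1 / sqrt 3) = PI / 6) by (rewrite <- tan_PI6; apply atan_tan; lra).
  assert (atan x < atan (1 / sqrt 3)) by (apply atan_increasing; lra).
  assert (atan (- (1 / sqrt 3)) < atan x) by (apply atan_increasing; lra).
  rewrite atan_opp in *. apply Rabs_lt_between. lra.
Qed.

(* If [|a - b| < 1/4] then [a conj(b) = (1 - |a-b|^2/2) + i Im] lies well inside the right
   half-plane, with a small argument. *)
Lemma arg_small a b : on_circle a -> on_circle b -> dist2 a b < 1 / 4 ->
  on_circle (cmul a (cconj b)) /\ fst (cmul a (cconj b)) > 0 /\
  Rabs (arg (cmul a (cconj b))) < PI / 6.
Proof.
  intros Ha Hb Hd.
  assert (Hu : on_circle (cmul a (cconj b))) by (apply on_circle_cmul, on_circle_cconj; auto).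
  pose proof (dist2_sq a b) as Hsq. pose proof (dist2_ge0 a b).
  unfold on_circle, cmul, cconj, arg in *; simpl in *.
  set (dd := dist2 a b) in *.
  assert (Hre : fst a * fst b - snd a * - snd b = 1 - dd * dd / 2) by nra.
  split; auto. split; [nra|]. apply atan_lt_PI6. rewrite Hre.
  set (im := fst a * - snd b + snd a * fst b) in *.
  assert (im ^ 2 <= dd * dd) by (rewrite Hre in Hu; nra).
  assert (Him : - (1 / 4) < im < 1 / 4) by (split; nra).
  set (den := 1 - dd * dd / 2).
  assert (Hden : den > 31 / 32) by (unfold den; nra).
  apply Rabs_lt_between. unfold Rdiv.
  assert (Hi : den * / den = 1) by (field; lra).
  assert (0 < / den) by (apply Rinv_0_lt_compat; lra).
  split; nra.
Qed.

(* The angle from [a] to [a'] minus the angle from [b] to [b'] equals the difference of the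
   cross angles: the four small angles close up, since all of them lie in (-PI/2, PI/2). *)
Lemma arg_quadrilateral a a' b b' :
  on_circle a -> on_circle a' -> on_circle b -> on_circle b' ->
  dist2 a' a < 1 / 4 -> dist2 b' b < 1 / 4 -> dist2 b a < 1 / 4 -> dist2 b' a' < 1 / 4 ->
  arg (cmul a' (cconj a)) - arg (cmul b' (cconj b)) =
  arg (cmul b (cconj a)) - arg (cmul b' (cconj a')).
Proof.
  intros Ua Ua' Ub Ub' D1 D2 D3 D4.
  destruct (arg_small b' b Ub' Ub D2) as [UX [PX AX]].
  destruct (arg_small b a Ub Ua D3) as [UY [PY AY]].
  destruct (arg_small b' a' Ub' Ua' D4) as [UZ [PZ AZ]].
  set (al := arg (cmul b' (cconj b))) in *.
  set (be := arg (cmul b (cconj a))) in *.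
  set (ga := arg (cmul b' (cconj a'))) in *.
  assert (E : cmul a' (cconj a) = expi (al + be - ga)).
  { transitivity (cmul (cmul (cmul b' (cconj b)) (cmul b (cconj a))) (cconj (cmul b' (cconj a')))).
    - symmetry. rewrite cmul_cconj_cancel, cconj_cmul_cconj, cmul_comm, cmul_cconj_cancel by auto.
      reflexivity.
    - rewrite (expi_arg _ UX PX), (expi_arg _ UY PY), (expi_arg _ UZ PZ). fold al be ga.
      rewrite cconj_expi, !cmul_expi. f_equal; ring. }
  rewrite E, arg_expi; [fold al be ga; ring|].
  pose proof PI_RGT_0. apply Rabs_lt_between in AX, AY, AZ. lra.
Qed.

Definition winding_sum (a : nat -> pt) (N : nat) : R :=
  rsum (fun i => arg (cmul (a (S i)) (cconj (a i)))) N.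

Lemma winding_sum_ext a b N :
  (forall i, (i <= N)%nat -> a i = b i) -> winding_sum a N = winding_sum b N.
Proof. intros H. apply rsum_ext. intros i Hi. rewrite !H by lia. auto. Qed.

Lemma winding_sum_perturb (a b : nat -> pt) N :
  (forall i, (i <= N)%nat -> on_circle (a i) /\ on_circle (b i)) ->
  (forall i, (i < N)%nat -> dist2 (a (S i)) (a i) < 1 / 4 /\ dist2 (b (S i)) (b i) < 1 / 4) ->
  (forall i, (i <= N)%nat -> dist2 (b i) (a i) < 1 / 4) ->
  a O = b O -> a N = b N -> winding_sum a N = winding_sum b N.
Proof.
  intros HU HS HD H0 HN. unfold winding_sum.
  apply Rminus_diag_uniq. rewrite <- rsum_minus.
  rewrite (rsum_telescope _ (fun j => - arg (cmul (b j) (cconj (a j))))).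
  - rewrite <- H0, <- HN, !arg_cmul_cconj_self by (apply HU; lia). ring.
  - intros i Hi. destruct (HU i ltac:(lia)), (HU (S i) ltac:(lia)), (HS i Hi).
    rewrite arg_quadrilateral by (auto; apply HD; lia). ring.
Qed.

Lemma winding_sum_expi (th : nat -> R) N :
  (forall i, (i < N)%nat -> Rabs (th (S i) - th i) < PI / 2) ->
  winding_sum (fun i => expi (th i)) N = th N - th O.
Proof.
  intros H. apply rsum_telescope. intros i Hi.
  rewrite cconj_expi, cmul_expi. apply arg_expi.
  specialize (H i Hi). apply Rabs_lt_between in H. lra.
Qed.

(** * The circles of W *)

Definition radius (n : nat) : R := / 2 ^ S n.
Definition centre (n : nat) : pt := (/ INR n, radius n).
Definition circle_pt (n : nat) (th : R) : pt :=
  (cos (2 * PI * th) / 2 ^ S n + / INR n, sin (2 * PI * th) / 2 ^ S n + / 2 ^ S n).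

Lemma radius_pos n : 0 < radius n.
Proof. apply Rinv_0_lt_compat, pow2_pos. Qed.

Lemma dist2_circle_pt n th : dist2 (circle_pt n th) (centre n) = radius n.
Proof.
  unfold dist2, circle_pt, centre, radius; cbn [fst snd]. pose proof (pow2_pos (S n)).
  replace ((cos (2 * PI * th) / 2 ^ S n + / INR n - / INR n) ^ 2 +
           (sin (2 * PI * th) / 2 ^ S n + / 2 ^ S n - / 2 ^ S n) ^ 2)
    with ((sin (2 * PI * th) ^ 2 + cos (2 * PI * th) ^ 2) * (/ 2 ^ S n) ^ 2) by (unfold Rdiv; ring).
  pose proof (sin2_cos2 (2 * PI * th)) as E. unfold Rsqr in E.
  replace (sin (2 * PI * th) ^ 2 + cos (2 * PI * th) ^ 2) with 1 by (simpl; lra).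
  rewrite Rmult_1_l. apply sqrt_pow2. left. apply Rinv_0_lt_compat. auto.
Qed.

Lemma W_cases z : W z ->
  (snd z = 0 /\ 0 <= fst z <= 1) \/ exists m, (1 <= m)%nat /\ dist2 z (centre m) = radius m.
Proof.
  intros [[m [th [Hm [_ [E1 E2]]]]]|H]; [right|left; auto].
  exists m. split; auto. destruct z as [x y]; simpl in *. subst. apply dist2_circle_pt.
Qed.

Lemma circle_fst_near n z : dist2 z (centre n) = radius n -> Rabs (fst z - / INR n) <= radius n.
Proof. intros H. rewrite <- H. apply (dist2_ge_abs_fst z (centre n)). Qed.

Lemma antitone_from_step (f : nat -> R) m k :
  (forall j, (m <= j)%nat -> f (S j) <= f j) -> f (m + k)%nat <= f m.
Proof.
  intros H. induction k as [|k IH]; [rewrite Nat.add_0_r; lra|].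
  rewrite Nat.add_succ_r. eapply Rle_trans; [apply H; lia|exact IH].
Qed.

Lemma sq_le_pow2 m : INR m * (INR m + 1) + 2 <= 2 ^ S (S m).
Proof.
  induction m as [|m IH]; [simpl; lra|].
  rewrite S_INR. change (2 ^ S (S (S m))) with (2 * 2 ^ S (S m)).
  destruct m; [simpl; lra|]. pose proof (INR_ge1 (S m) ltac:(lia)). nra.
Qed.

Lemma sq_le_pow2_large n : (8 <= n)%nat -> 13 * INR n * INR n <= 2 ^ S (S (S n)).
Proof.
  intros H. induction H as [|m Hm IH]; [simpl; lra|].
  rewrite S_INR. change (2 ^ S (S (S (S m)))) with (2 * 2 ^ S (S (S m))).
  assert (8 <= INR m) by (apply (le_INR 8) in Hm; simpl in Hm; lra). nra.
Qed.

Lemma circle_left_end_antitone m k : (1 <= m)%nat ->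
  / INR (m + k) - radius (m + k) <= / INR m - radius m.
Proof.
  intros Hm. apply (antitone_from_step (fun j => / INR j - radius j)). intros j Hj.
  pose proof (INR_ge1 j ltac:(lia)). pose proof (sq_le_pow2 j). pose proof (pow2_pos (S j)).
  unfold radius. rewrite S_INR. change (2 ^ S (S j)) with (2 * 2 ^ S j) in *.
  set (P := 2 ^ S j) in *.
  assert (E : / INR j - / P - (/ (INR j + 1) - / (2 * P)) =
              (2 * P - INR j * (INR j + 1)) / (2 * P * INR j * (INR j + 1))) by (field; lra).
  assert (0 <= (2 * P - INR j * (INR j + 1)) / (2 * P * INR j * (INR j + 1)))
    by (apply Rdiv_le_0_compat; [lra|]; apply Rmult_lt_0_compat; nra).
  lra.
Qed.

Lemma circle_right_end_antitone m k : (1 <= m)%nat ->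
  / INR (m + k) + radius (m + k) <= / INR m + radius m.
Proof.
  intros Hm. apply (antitone_from_step (fun j => / INR j + radius j)). intros j Hj.
  pose proof (INR_ge1 j ltac:(lia)). pose proof (pow2_pos (S j)).
  unfold radius. rewrite S_INR. change (2 ^ S (S j)) with (2 * 2 ^ S j).
  apply Rplus_le_compat; apply Rinv_le_contravar; lra.
Qed.

Lemma circles_separated n m x : (8 <= n)%nat -> (1 <= m)%nat -> m <> n ->
  Rabs (x - / INR m) <= radius m -> Rabs (x - / INR n) >= 5 / 4 * radius n.
Proof.
  intros Hn Hm Hmn Hx. apply Rabs_le_between in Hx.
  pose proof (sq_le_pow2_large n Hn) as Hbig. pose proof (pow2_pos n) as HP.
  replace (2 ^ S (S (S n))) with (8 * 2 ^ n) in Hbig by (simpl; ring).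
  assert (H8 : 8 <= INR n) by (apply (le_INR 8) in Hn; simpl in Hn; lra).
  unfold radius in *. change (2 ^ S n) with (2 * 2 ^ n).
  set (P := 2 ^ n) in *. set (X := INR n) in *.
  destruct (Nat.lt_ge_cases n m) as [Hlt|Hge].
  - pose proof (circle_right_end_antitone (S n) (m - S n) ltac:(lia)) as Hr.
    replace (S n + (m - S n))%nat with m in Hr by lia.
    unfold radius in Hr. rewrite S_INR in Hr. fold X in Hr.
    change (2 ^ S (S n)) with (2 * (2 * P)) in Hr.
    assert (E : / X - 5 / 4 * / (2 * P) - (/ (X + 1) + / (2 * (2 * P))) =
                (8 * P - 7 * X * (X + 1)) / (8 * P * X * (X + 1))) by (field; lra).
    assert (0 <= (8 * P - 7 * X * (X + 1)) / (8 * P * X * (X + 1)))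
      by (apply Rdiv_le_0_compat; [nra|]; apply Rmult_lt_0_compat; nra).
    assert (0 < / (2 * P)) by (apply Rinv_0_lt_compat; lra).
    rewrite Rabs_left1 by lra. lra.
  - pose proof (circle_left_end_antitone m (n - 1 - m) Hm) as Hl.
    replace (m + (n - 1 - m))%nat with (n - 1)%nat in Hl by lia.
    unfold radius in Hl.
    replace (INR (n - 1)) with (X - 1) in Hl by (rewrite minus_INR by lia; simpl; unfold X; ring).
    replace (2 ^ S (n - 1)) with P in Hl by (replace (S (n - 1)) with n by lia; reflexivity).
    assert (E : / (X - 1) - / P - (/ X + 5 / 4 * / (2 * P)) =
                (8 * P - 13 * X * (X - 1)) / (8 * P * X * (X - 1))) by (field; split; lra).
    assert (0 <= (8 * P - 13 * X * (X - 1)) / (8 * P * X * (X - 1)))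
      by (apply Rdiv_le_0_compat; [nra|]; apply Rmult_lt_0_compat; nra).
    assert (0 < / (2 * P)) by (apply Rinv_0_lt_compat; lra).
    rewrite Rabs_right by lra. lra.
Qed.

Lemma circles_disjoint n m z : (8 <= n)%nat -> (1 <= m)%nat -> m <> n ->
  dist2 z (centre m) = radius m -> dist2 z (centre n) <> radius n.
Proof.
  intros Hn Hm Hmn Hzm Hzn.
  pose proof (circles_separated n m _ Hn Hm Hmn (circle_fst_near _ _ Hzm)).
  pose proof (circle_fst_near _ _ Hzn). pose proof (radius_pos n). lra.
Qed.

Lemma W_near_circle n z w : (8 <= n)%nat -> dist2 z (centre n) = radius n -> W w ->
  dist2 z w < radius n / 4 -> dist2 w (centre n) = radius n \/ snd w = 0.
Proof.
  intros Hn Hz HW Hd. destruct (W_cases w HW) as [[Hw _]|[m [Hm Hwm]]]; [now right|].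
  destruct (Nat.eq_dec m n) as [->|Hmn]; [now left|exfalso].
  pose proof (circles_separated n m _ Hn Hm Hmn (circle_fst_near _ _ Hwm)).
  pose proof (circle_fst_near _ _ Hz). pose proof (dist2_ge_abs_fst z w).
  pose proof (Rabs_triang (fst z - / INR n) (fst w - fst z)).
  replace (fst z - / INR n + (fst w - fst z)) with (fst w - / INR n) in * by ring.
  rewrite (Rabs_minus_sym (fst w) (fst z)) in *. lra.
Qed.

(* Every other point of W goes to [(0,-1)], the
   image of the point [1/n] where the circle touches the segment: this makes the chart
   continuous on W, a retraction of W onto the circle. *)
Definition circle_chart (n : nat) (z : pt) : pt :=
  if Req_EM_T (dist2 z (centre n)) (radius n)
  then ((fst z - / INR n) / radius n, (snd z - radius n) / radius n) else (0, -1).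

Lemma circle_chart_on n z : dist2 z (centre n) = radius n ->
  circle_chart n z = ((fst z - / INR n) / radius n, (snd z - radius n) / radius n).
Proof. intros H. unfold circle_chart. destruct Req_EM_T; tauto. Qed.

Lemma circle_chart_off n z : dist2 z (centre n) <> radius n -> circle_chart n z = (0, -1).
Proof. intros H. unfold circle_chart. destruct Req_EM_T; tauto. Qed.

Lemma circle_equation n z : dist2 z (centre n) = radius n ->
  (fst z - / INR n) ^ 2 + (snd z - radius n) ^ 2 = radius n * radius n.
Proof. intros H. pose proof (dist2_sq z (centre n)) as E. rewrite H in E. symmetry. exact E. Qed.

Lemma on_circle_circle_chart n z : on_circle (circle_chart n z).
Proof.
  unfold on_circle. destruct (Req_EM_T (dist2 z (centre n)) (radius n)) as [E|E].
  - rewrite circle_chart_on by auto. cbn [fst snd].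
    pose proof (circle_equation n z E). pose proof (radius_pos n).
    set (a := / INR n) in *.
    replace (((fst z - a) / radius n) ^ 2 + ((snd z - radius n) / radius n) ^ 2) with
      (((fst z - a) ^ 2 + (snd z - radius n) ^ 2) / (radius n * radius n)) by (field; lra).
    rewrite H. field. lra.
  - rewrite circle_chart_off by auto. cbn [fst snd]. ring.
Qed.

Lemma circle_chart_circle_pt n th : circle_chart n (circle_pt n th) = expi (2 * PI * th).
Proof.
  rewrite circle_chart_on by apply dist2_circle_pt.
  unfold circle_pt, expi, radius. cbn [fst snd]. pose proof (pow2_pos (S n)).
  set (a := / INR n). f_equal; field; lra.
Qed.

Lemma circle_chart_segment n z : snd z = 0 -> circle_chart n z = (0, -1).
Proof.
  intros Hz. destruct (Req_EM_T (dist2 z (centre n)) (radius n)) as [E|E];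
    [|apply circle_chart_off; auto].
  pose proof (circle_equation n z E) as H. rewrite Hz in H. pose proof (radius_pos n).
  assert (E3 : fst z - / INR n = 0) by nra.
  rewrite circle_chart_on, E3, Hz by auto. f_equal; field; lra.
Qed.

Lemma dist2_circle_chart_bottom n z : dist2 z (centre n) = radius n ->
  dist2 (circle_chart n z) (0, -1) = sqrt (2 * snd z / radius n).
Proof.
  intros H. rewrite circle_chart_on by auto. pose proof (circle_equation n z H).
  pose proof (radius_pos n). unfold dist2; cbn [fst snd]. f_equal. set (a := / INR n) in *.
  replace (((fst z - a) / radius n - 0) ^ 2 + ((snd z - radius n) / radius n - -1) ^ 2)
    with (((fst z - a) ^ 2 + (snd z - radius n) ^ 2 + 2 * radius n * snd z
           - radius n * radius n) / (radius n * radius n)) by (field; lra).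
  rewrite H0. field. lra.
Qed.

Lemma circle_chart_near_segment n z w eps : eps > 0 -> dist2 z (centre n) = radius n ->
  snd w = 0 -> dist2 z w < eps * eps * radius n / 2 ->
  dist2 (circle_chart n z) (circle_chart n w) < eps.
Proof.
  intros Heps Hz Hw Hd. rewrite (circle_chart_segment n w Hw), dist2_circle_chart_bottom by auto.
  pose proof (dist2_ge_abs_snd z w) as Hy. rewrite Hw, Rminus_0_r in Hy.
  pose proof (Rle_abs (snd z)). pose proof (radius_pos n).
  assert (0 <= snd z)
    by (pose proof (circle_equation n z Hz); pose proof (pow2_ge_0 (fst z - / INR n)); nra).
  rewrite <- (sqrt_Rsqr eps) by lra. apply sqrt_lt_1_alt. split.
  - apply Rdiv_le_0_compat; lra.
  - unfold Rsqr. apply Rmult_lt_reg_r with (radius n); auto.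
    unfold Rdiv. rewrite Rmult_assoc, Rinv_l by lra. lra.
Qed.

Lemma circle_chart_unif n : (8 <= n)%nat -> forall eps, eps > 0 -> exists del, del > 0 /\
  forall z w, W z -> W w -> dist2 z w < del -> dist2 (circle_chart n z) (circle_chart n w) < eps.
Proof.
  intros Hn eps Heps. pose proof (radius_pos n) as Hr. set (r := radius n) in *.
  assert (0 < eps * r) by nra. assert (0 < eps * eps * r) by nra.
  assert (Side : forall z w, dist2 z (centre n) = r -> dist2 w (centre n) <> r -> W w ->
             dist2 z w < Rmin (eps * eps * r / 2) (r / 4) ->
             dist2 (circle_chart n z) (circle_chart n w) < eps).
  { intros z w Hz Hw HW Hd.
    pose proof (Rmin_l (eps * eps * r / 2) (r / 4)).
    pose proof (Rmin_r (eps * eps * r / 2) (r / 4)).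
    destruct (W_near_circle n z w Hn Hz HW ltac:(fold r; lra)) as [|Hw0]; [tauto|].
    apply circle_chart_near_segment; auto. fold r. lra. }
  exists (Rmin (eps * r / 4) (Rmin (eps * eps * r / 2) (r / 4))).
  split; [repeat apply Rmin_glb_lt; lra|].
  intros z w Hz Hw Hd. pose proof (Rmin_l (eps * r / 4) (Rmin (eps * eps * r / 2) (r / 4))).
  pose proof (Rmin_r (eps * r / 4) (Rmin (eps * eps * r / 2) (r / 4))).
  destruct (Req_EM_T (dist2 z (centre n)) r) as [Ez|Ez];
    destruct (Req_EM_T (dist2 w (centre n)) r) as [Ew|Ew].
  - rewrite !circle_chart_on by auto. fold r.
    eapply Rle_lt_trans; [apply dist2_le_abs|]. cbn [fst snd]. set (a := / INR n).
    replace ((fst z - a) / r - (fst w - a) / r) with ((fst z - fst w) / r) by (field; lra).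
    replace ((snd z - r) / r - (snd w - r) / r) with ((snd z - snd w) / r) by (field; lra).
    unfold Rdiv. rewrite !Rabs_mult, (Rabs_right (/ r)) by (left; apply Rinv_0_lt_compat; lra).
    pose proof (dist2_ge_abs_fst z w). pose proof (dist2_ge_abs_snd z w).
    apply Rmult_lt_reg_r with r; auto. rewrite Rmult_plus_distr_r, !Rmult_assoc, Rinv_l by lra.
    nra.
  - apply Side; auto. lra.
  - rewrite dist2_sym. apply Side; auto. rewrite dist2_sym. lra.
  - rewrite !circle_chart_off, dist2_refl by auto. lra.
Qed.

(** * The detour loops *)

(* [block_index u] is the [n >= 1] with [1/(n+1) < u <= 1/n], for [0 < u <= 1]. *)
Definition block_index (u : R) : nat := (Z.to_nat (up (/ u)) - 1)%nat.

Lemma block_index_spec n u : (1 <= n)%nat -> / INR (S n) < u <= / INR n -> block_index u = n.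
Proof.
  intros Hn [H1 H2]. pose proof (lt_0_INR n Hn). pose proof (lt_0_INR (S n) ltac:(lia)).
  assert (Hu : 0 < u) by (pose proof (Rinv_0_lt_compat _ H0); lra).
  assert (A1 : / u < INR (S n))
    by (rewrite <- (Rinv_inv (INR (S n)));
        apply Rinv_0_lt_contravar; auto; apply Rinv_0_lt_compat; auto).
  assert (A2 : INR n <= / u) by (rewrite <- (Rinv_inv (INR n)); apply Rinv_le_contravar; auto).
  assert (E : Z.of_nat (S n) = up (/ u))
    by (apply tech_up; rewrite <- INR_IZR_INZ; auto; rewrite S_INR in *; lra).
  unfold block_index. rewrite <- E, Nat2Z.id. lia.
Qed.

Lemma block_index_range u : 0 < u <= 1 ->
  (1 <= block_index u)%nat /\ / INR (S (block_index u)) < u <= / INR (block_index u).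
Proof.
  intros [H1 H2]. destruct (archimed (/ u)) as [A1 A2].
  assert (Hiu : 1 <= / u) by (rewrite <- Rinv_1; apply Rinv_le_contravar; lra).
  unfold block_index. set (z := up (/ u)) in *.
  assert (Hz : (0 <= z)%Z) by (apply le_IZR; simpl; lra).
  assert (E : IZR z = INR (Z.to_nat z)) by (rewrite INR_IZR_INZ, Z2Nat.id; auto).
  rewrite E in A1, A2.
  set (k := Z.to_nat z) in *.
  assert (Hk : (2 <= k)%nat) by (destruct k as [|[|k]]; simpl in A1; [lra|lra|lia]).
  replace (S (k - 1)) with k by lia.
  rewrite minus_INR by lia. simpl INR.
  assert (INR k >= 2) by (apply (le_INR 2) in Hk; simpl in Hk; lra).
  split; [lia|split].
  - rewrite <- (Rinv_inv u). apply Rinv_0_lt_contravar; auto. apply Rinv_0_lt_compat; lra.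
  - rewrite <- (Rinv_inv u). apply Rinv_le_contravar; lra.
Qed.

Lemma Rinv_INR_S_lt n : (1 <= n)%nat -> 0 < / INR (S n) < / INR n.
Proof.
  intros Hn. pose proof (lt_0_INR n Hn). rewrite S_INR.
  split; [apply Rinv_0_lt_compat; lra|apply Rinv_0_lt_contravar; lra].
Qed.

Definition block_mid (n : nat) : R := (/ INR (S n) + / INR n) / 2.
Definition block_param (n : nat) (u : R) : R := (u - block_mid n) / (/ INR n - block_mid n).

Lemma block_mid_bounds n : (1 <= n)%nat -> / INR (S n) < block_mid n < / INR n.
Proof. intros Hn. pose proof (Rinv_INR_S_lt n Hn). unfold block_mid. lra. Qed.

Lemma block_param_range n u : (1 <= n)%nat -> block_mid n <= u <= / INR n ->
  0 <= block_param n u <= 1.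
Proof.
  intros Hn Hu. pose proof (block_mid_bounds n Hn). unfold block_param. split.
  - apply Rdiv_le_0_compat; lra.
  - apply Rmult_le_reg_r with (/ INR n - block_mid n); [lra|].
    unfold Rdiv. rewrite Rmult_assoc, Rinv_l by lra. lra.
Qed.

Lemma block_param_le0 n u : (1 <= n)%nat -> u <= block_mid n -> block_param n u <= 0.
Proof.
  intros Hn Hu. pose proof (block_mid_bounds n Hn). unfold block_param.
  apply Rmult_le_reg_r with (/ INR n - block_mid n); [lra|].
  unfold Rdiv. rewrite Rmult_assoc, Rinv_l by lra. lra.
Qed.

Lemma block_param_ge1 n u : (1 <= n)%nat -> / INR n <= u -> 1 <= block_param n u.
Proof.
  intros Hn Hu. pose proof (block_mid_bounds n Hn). unfold block_param.
  apply Rmult_le_reg_r with (/ INR n - block_mid n); [lra|].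
  unfold Rdiv. rewrite Rmult_assoc, Rinv_l by lra. lra.
Qed.

Lemma block_param_mid n : (1 <= n)%nat -> block_param n (block_mid n) = 0.
Proof.
  intros Hn. pose proof (block_mid_bounds n Hn). unfold block_param. set (b := / INR n) in *.
  field. lra.
Qed.

Lemma block_param_end n : (1 <= n)%nat -> block_param n (/ INR n) = 1.
Proof.
  intros Hn. pose proof (block_mid_bounds n Hn). unfold block_param. set (b := / INR n) in *.
  field. lra.
Qed.

Lemma circle_pt_start n : circle_pt n (- / 4) = (/ INR n, 0).
Proof.
  unfold circle_pt. replace (2 * PI * - / 4) with (- (PI / 2)) by field.
  rewrite cos_neg, sin_neg, cos_PI2, sin_PI2. f_equal; unfold Rdiv; ring.
Qed.

Lemma circle_pt_end n : circle_pt n (3 / 4) = (/ INR n, 0).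
Proof.
  unfold circle_pt. replace (2 * PI * (3 / 4)) with (3 * (PI / 2)) by field.
  rewrite cos_3PI2, sin_3PI2. f_equal; unfold Rdiv; ring.
Qed.

Lemma W_circle_pt n th : (1 <= n)%nat -> - / 4 <= th <= 3 / 4 -> W (circle_pt n th).
Proof.
  intros Hn Hth. left. exists n. destruct (Rle_dec 0 th).
  - exists th. unfold circle_pt; simpl. repeat split; auto; lra.
  - exists (th + 1). unfold circle_pt; cbn [fst snd].
    replace (2 * PI * (th + 1)) with (2 * PI * th + 2 * INR 1 * PI) by (simpl; ring).
    rewrite cos_period, sin_period. repeat split; auto; lra.
Qed.

Lemma circle_angle_inj a b : cos a = cos b -> sin a = sin b -> Rabs (a - b) < 2 * PI -> a = b.
Proof.
  intros Hc Hs Hab.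
  assert (H1 : cos (a - b) = 1).
  { rewrite cos_minus, Hc, Hs. pose proof (sin2_cos2 b). unfold Rsqr in H. lra. }
  replace (a - b) with (2 * ((a - b) / 2)) in H1 by field. rewrite cos_2a_sin in H1.
  assert (H2 : sin ((a - b) / 2) = 0) by nra.
  destruct (sin_eq_0_0 _ H2) as [k Hk].
  apply Rabs_lt_between in Hab. pose proof PI_RGT_0.
  assert (- PI < IZR k * PI < PI) by (rewrite <- Hk; lra).
  assert (-1 < IZR k < 1) by (split; nra).
  assert (k = 0%Z) by (destruct H3; apply lt_IZR in H3; apply lt_IZR in H4; lia).
  subst k. simpl in Hk. lra.
Qed.

Lemma circle_pt_inj n th1 th2 : - / 4 < th1 <= 3 / 4 -> - / 4 < th2 <= 3 / 4 ->
  circle_pt n th1 = circle_pt n th2 -> th1 = th2.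
Proof.
  intros H1 H2 E. apply (f_equal (circle_chart n)) in E.
  rewrite !circle_chart_circle_pt in E. injection E as Ec Es.
  assert (2 * PI * th1 = 2 * PI * th2).
  { apply circle_angle_inj; auto. pose proof PI_RGT_0. apply Rabs_lt_between. nra. }
  pose proof PI_RGT_0. nra.
Qed.

Lemma circle_pt_on_segment n th : - / 4 < th <= 3 / 4 -> snd (circle_pt n th) = 0 -> th = 3 / 4.
Proof.
  intros Hth E. apply (circle_pt_inj n); [auto|lra|].
  unfold circle_pt in E. cbn [snd] in E. pose proof (pow2_pos (S n)).
  assert (Hsin : sin (2 * PI * th) = -1).
  { apply Rmult_eq_reg_r with (/ 2 ^ S n); [|apply Rinv_neq_0_compat; lra]. unfold Rdiv in E. lra. }
  assert (Hcos : cos (2 * PI * th) = 0)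
    by (pose proof (sin2_cos2 (2 * PI * th)) as S2; rewrite Hsin in S2; unfold Rsqr in S2; nra).
  rewrite circle_pt_end. unfold circle_pt. rewrite Hsin, Hcos. f_equal; unfold Rdiv; ring.
Qed.

Lemma finite_of_subsingleton (P : R -> Prop) :
  (forall t1 t2, P t1 -> P t2 -> t1 = t2) -> exists l, forall t, P t -> In t l.
Proof.
  intros H. destruct (classic (exists t, P t)) as [[t0 Ht0]|N].
  - exists (t0 :: nil). intros t Ht. left. symmetry. auto.
  - exists nil. intros t Ht. apply N. eauto.
Qed.

Lemma cont_on_blocks_tail g :
  (forall n, (1 <= n)%nat -> cont_on (/ INR (S n)) (/ INR n) g) ->
  forall n, (1 <= n)%nat -> cont_on (/ INR (S n)) 1 g.
Proof.
  intros Hp n Hn. induction Hn as [|m Hm IH].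
  - pose proof (Hp 1%nat (le_n 1)) as K. simpl INR in K at 2. rewrite Rinv_1 in K. exact K.
  - pose proof (Rinv_INR_S_lt (S m) ltac:(lia)). pose proof (Rinv_INR_le1 (S m) ltac:(lia)).
    apply cont_on_paste with (/ INR (S m)); [lra|lra|apply Hp; lia|auto].
Qed.

Lemma cont_on_blocks g C :
  (forall n, (1 <= n)%nat -> cont_on (/ INR (S n)) (/ INR n) g) ->
  g 0 = origin -> C > 0 -> (forall u, 0 < u <= 1 -> dist2 (g u) origin <= C * u) ->
  cont_on 0 1 g.
Proof.
  intros Hp H0 HC Hb t Ht eps Heps.
  destruct (Rle_lt_dec t 0) as [Ht0|Ht0].
  - assert (t = 0) by lra. subst t. exists (eps / C). split; [apply Rdiv_lt_0_compat; lra|].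
    intros s Hs Hst. rewrite H0. destruct (Req_dec s 0) as [->|E]; [rewrite H0, dist2_refl; lra|].
    rewrite Rminus_0_r, Rabs_right in Hst by lra.
    eapply Rle_lt_trans; [apply Hb; lra|].
    apply Rmult_lt_reg_r with (/ C); [apply Rinv_0_lt_compat; lra|].
    replace (C * s * / C) with s by (field; lra). exact Hst.
  - destruct (block_index_range t ltac:(lra)) as [Hn [Hl Hr]].
    set (n := block_index t) in *.
    destruct (cont_on_blocks_tail g Hp n Hn t ltac:(lra) eps Heps) as [d [Hd G]].
    exists (Rmin d (t - / INR (S n))). split; [apply Rmin_glb_lt; lra|].
    intros s Hs Hst.
    pose proof (Rmin_l d (t - / INR (S n))). pose proof (Rmin_r d (t - / INR (S n))).
    apply G; [apply Rabs_lt_between in Hst|]; lra.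
Qed.


Definition clamp01 (x : R) : R := Rmax 0 (Rmin x 1).

Lemma clamp01_lipschitz x y : Rabs (clamp01 x - clamp01 y) <= Rabs (x - y).
Proof.
  pose proof (Rle_abs (x - y)). pose proof (Rle_abs (- (x - y))). rewrite Rabs_Ropp in H0.
  unfold clamp01, Rmax, Rmin. destruct (Rle_dec x 1); destruct (Rle_dec y 1);
  repeat match goal with |- context [Rle_dec ?a ?b] => destruct (Rle_dec a b) end;
  apply Rabs_le_between; lra.
Qed.

Lemma clamp01_le0 x : x <= 0 -> clamp01 x = 0.
Proof. intros. unfold clamp01, Rmax, Rmin. destruct (Rle_dec x 1); destruct Rle_dec; lra. Qed.

Lemma clamp01_ge1 x : 1 <= x -> clamp01 x = 1.
Proof. intros. unfold clamp01, Rmax, Rmin. destruct (Rle_dec x 1); destruct Rle_dec; lra. Qed.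

Lemma clamp01_id x : 0 <= x <= 1 -> clamp01 x = x.
Proof. intros. unfold clamp01, Rmax, Rmin. destruct (Rle_dec x 1); destruct Rle_dec; lra. Qed.

Lemma expi_bottom : expi (- (PI / 2)) = (0, -1).
Proof. unfold expi. rewrite cos_neg, sin_neg, cos_PI2, sin_PI2. reflexivity. Qed.

Lemma expi_bottom_turn : expi (- (PI / 2) + 2 * PI * 1) = (0, -1).
Proof.
  unfold expi.
  replace (- (PI / 2) + 2 * PI * 1) with (- (PI / 2) + 2 * INR 1 * PI) by (simpl; ring).
  rewrite cos_period, sin_period. apply expi_bottom.
Qed.
Section DetourLoop.

(* [A n] says whether the loop goes around the n-th circle; only circles from the eighth on
   are used, as these are well separated. *)
Variable A : nat -> bool.
Hypothesis A_large : forall m, A m = true -> (8 <= m)%nat.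

(* On the block [1/(n+1), 1/n], the outward path moves along the segment, except when
   [A n] holds: then it covers the segment in the first half of the block and goes once
   around the n-th circle, from its contact point [1/n] back to it, in the second half. *)
Definition block_path (n : nat) (u : R) : pt :=
  if A n then
    if Rle_dec u (block_mid n) then (2 * u - / INR (S n), 0)
    else circle_pt n (block_param n u - / 4)
  else (u, 0).

Definition outward_path (u : R) : pt :=
  if Rle_dec u 0 then (0, 0) else block_path (block_index u) u.

Definition detour_loop (t : R) : pt :=
  if Rle_dec t (/ 2) then outward_path (2 * t) else (2 - 2 * t, 0).

Lemma block_path_left n : (1 <= n)%nat -> block_path n (/ INR (S n)) = (/ INR (S n), 0).
Proof.
  intros Hn. pose proof (block_mid_bounds n Hn). unfold block_path.
  destruct (A n); [|auto]. destruct Rle_dec; [|lra]. f_equal; ring.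
Qed.

Lemma block_path_right n : (1 <= n)%nat -> block_path n (/ INR n) = (/ INR n, 0).
Proof.
  intros Hn. pose proof (block_mid_bounds n Hn). unfold block_path.
  destruct (A n); [|auto]. destruct Rle_dec; [lra|].
  rewrite block_param_end by auto. replace (1 - / 4) with (3 / 4) by field. apply circle_pt_end.
Qed.

Lemma outward_path_block n u : (1 <= n)%nat -> / INR (S n) <= u <= / INR n ->
  outward_path u = block_path n u.
Proof.
  intros Hn Hu. pose proof (Rinv_INR_S_lt n Hn). unfold outward_path.
  destruct (Rle_dec u 0); [lra|].
  destruct (Req_dec u (/ INR (S n))) as [->|E].
  - pose proof (Rinv_INR_S_lt (S n) ltac:(lia)).
    rewrite (block_index_spec (S n)), block_path_right, block_path_left by (auto; lia || lra).
    reflexivity.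
  - rewrite (block_index_spec n); auto. lra.
Qed.

Lemma W_block_path n u : (1 <= n)%nat -> / INR (S n) < u <= / INR n -> W (block_path n u).
Proof.
  intros Hn Hu. pose proof (Rinv_INR_S_lt n Hn). pose proof (block_mid_bounds n Hn).
  pose proof (Rinv_INR_le1 n Hn). unfold block_path.
  destruct (A n); [destruct Rle_dec|].
  - right. cbn [fst snd]. unfold block_mid in *. lra.
  - apply W_circle_pt; auto. pose proof (block_param_range n u Hn ltac:(lra)). lra.
  - right. simpl. lra.
Qed.

Lemma W_detour_loop t : unit_I t -> W (detour_loop t).
Proof.
  intros [H0 H1]. unfold detour_loop, outward_path. destruct Rle_dec; [|right; simpl; lra].
  destruct Rle_dec; [right; simpl; lra|].
  destruct (block_index_range (2 * t) ltac:(lra)) as [Hn Hr]. apply W_block_path; auto.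
Qed.

Lemma detour_loop_0 : detour_loop 0 = origin.
Proof. unfold detour_loop, outward_path. do 2 (destruct Rle_dec; [|lra]). reflexivity. Qed.

Lemma detour_loop_1 : detour_loop 1 = origin.
Proof. unfold detour_loop. destruct Rle_dec; [lra|]. unfold origin. f_equal. ring. Qed.

Lemma cont_on_block_path n : (1 <= n)%nat -> cont_on (/ INR (S n)) (/ INR n) (block_path n).
Proof.
  intros Hn. pose proof (block_mid_bounds n Hn). destruct (A n) eqn:EA.
  - apply cont_on_paste with (block_mid n); try lra.
    + apply cont_on_ext with (fun u => (2 * u - / INR (S n), 0)).
      { intros x Hx. unfold block_path. rewrite EA. destruct Rle_dec; [auto|lra]. }
      apply cont_on_pair; intros; reg.
    + apply cont_on_ext with (fun u => circle_pt n (block_param n u - / 4)).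
      { intros x Hx. unfold block_path. rewrite EA. destruct Rle_dec; [|auto].
        assert (x = block_mid n) by lra. subst x.
        rewrite block_param_mid by auto. replace (0 - / 4) with (- / 4) by ring.
        rewrite circle_pt_start. f_equal. unfold block_mid. lra. }
      unfold circle_pt, block_param. apply cont_on_pair; intros; reg.
  - apply cont_on_ext with (fun u => (u, 0)); [intros; unfold block_path; rewrite EA; auto|].
    apply cont_on_pair; intros; reg.
Qed.

Lemma outward_path_bound u : 0 < u <= 1 -> dist2 (outward_path u) origin <= 6 * u.
Proof.
  intros Hu. destruct (block_index_range u Hu) as [Hn [Hl Hr]]. set (n := block_index u) in *.
  rewrite (outward_path_block n u Hn ltac:(lra)).
  pose proof (lt_0_INR n Hn). pose proof (INR_ge1 n Hn). rewrite S_INR in Hl.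
  assert (Hb : / INR n <= 2 * / (INR n + 1)).
  { apply Rmult_le_reg_r with (INR n * (INR n + 1)); [nra|].
    replace (/ INR n * (INR n * (INR n + 1))) with (INR n + 1) by (field; lra).
    replace (2 * / (INR n + 1) * (INR n * (INR n + 1))) with (2 * INR n) by (field; lra). lra. }
  pose proof (block_mid_bounds n Hn) as Hm. rewrite S_INR in Hm.
  eapply Rle_trans; [apply dist2_le_abs|]. unfold origin, block_path. cbn [fst snd].
  destruct (A n); [destruct Rle_dec|].
  - cbn [fst snd]. rewrite !Rminus_0_r, Rabs_R0, Rabs_right, S_INR by (rewrite S_INR; lra). lra.
  - unfold circle_pt. cbn [fst snd]. rewrite !Rminus_0_r.
    pose proof (pow2_pos (S n)). set (P := 2 ^ S n) in *.
    assert (HP : 2 * INR n <= P) by (unfold P; simpl; pose proof (INR_le_pow2 n); lra).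
    assert (HiP : / P <= / INR n / 2)
      by (replace (/ INR n / 2) with (/ (2 * INR n)) by (field; lra); apply Rinv_le_contravar; lra).
    set (th := 2 * PI * (block_param n u - / 4)).
    pose proof (COS_bound th). pose proof (SIN_bound th).
    assert (0 < / P) by (apply Rinv_0_lt_compat; lra).
    assert (Rabs (cos th / P + / INR n) <= / P + / INR n)
      by (apply Rabs_le_between; unfold Rdiv; split; nra).
    assert (Rabs (sin th / P + / P) <= 2 * / P)
      by (apply Rabs_le_between; unfold Rdiv; split; nra).
    lra.
  - cbn [fst snd]. rewrite !Rminus_0_r, Rabs_R0, Rabs_right by lra. lra.
Qed.

Lemma cont_on_outward_path : cont_on 0 1 outward_path.
Proof.
  apply cont_on_blocks with 6; [|unfold outward_path; destruct Rle_dec; [reflexivity|lra]|lra|].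
  - intros n Hn. apply cont_on_ext with (block_path n); [intros; apply outward_path_block; auto|].
    apply cont_on_block_path; auto.
  - apply outward_path_bound.
Qed.

Lemma cont_on_detour_loop : cont_on 0 1 detour_loop.
Proof.
  apply cont_on_paste with (/ 2); try lra.
  - apply cont_on_ext with (fun t => outward_path (2 * t + 0)).
    { intros x Hx. unfold detour_loop. destruct Rle_dec; [|lra]. f_equal; ring. }
    apply cont_on_affine; [apply cont_on_outward_path|intros; lra].
  - apply cont_on_ext with (fun t => (2 - 2 * t, 0)); [|apply cont_on_pair; intros; reg].
    intros x Hx. unfold detour_loop. destruct Rle_dec; [|auto].
    assert (x = / 2) by lra. subst x. replace (2 * / 2) with (/ INR 1) by (simpl; field).
    rewrite (outward_path_block 1); [|lia|pose proof (Rinv_INR_S_lt 1 ltac:(lia)); simpl INR; lra].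
    rewrite block_path_right by lia. simpl. f_equal; field.
Qed.

Lemma loopW_detour_loop : loopW detour_loop.
Proof.
  split; [exact cont_on_detour_loop|].
  split; [exact W_detour_loop|split; [exact detour_loop_0|exact detour_loop_1]].
Qed.

Lemma block_path_cases n u : (1 <= n)%nat -> / INR (S n) < u <= / INR n ->
  let z := block_path n u in
  (snd z = 0 /\ (u = fst z \/ u = (fst z + / INR (S (block_index (fst z)))) / 2)) \/
  (snd z <> 0 /\ exists th, A n = true /\ - / 4 < th <= 3 / 4 /\ z = circle_pt n th /\
     u = block_mid n + (th + / 4) * (/ INR n - block_mid n)).
Proof.
  intros Hn Hu z. pose proof (block_mid_bounds n Hn). unfold z, block_path.
  destruct (A n) eqn:EA; [destruct Rle_dec as [Hle|Hgt]|].
  - left. cbn [fst snd]. split; auto. right.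
    rewrite (block_index_spec n); [lra|auto|unfold block_mid in *; lra].
  - set (th := block_param n u - / 4).
    assert (Hth : - / 4 < th <= 3 / 4).
    { pose proof (block_param_range n u Hn ltac:(lra)). unfold th in *. split; [|lra].
      assert (0 < block_param n u) by (apply Rdiv_lt_0_compat; lra). lra. }
    assert (Eu : u = block_mid n + (th + / 4) * (/ INR n - block_mid n)).
    { unfold th, block_param. set (b := / INR n) in *. field. lra. }
    destruct (Req_dec (snd (circle_pt n th)) 0) as [E0|E0].
    + left. split; auto. left. pose proof (circle_pt_on_segment n th Hth E0) as E3.
      rewrite E3, circle_pt_end. cbn [fst]. rewrite Eu, E3. lra.
    + right. split; auto. exists th. auto.
  - left. cbn [fst snd]. auto.
Qed.

Lemma detour_loop_cases t : unit_I t ->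
  let x := fst (detour_loop t) in
  (snd (detour_loop t) = 0 /\
     In t (x / 2 :: (x + / INR (S (block_index x))) / 4 :: 1 - x / 2 :: nil)) \/
  (snd (detour_loop t) <> 0 /\ exists n th, A n = true /\ - / 4 < th <= 3 / 4 /\
     detour_loop t = circle_pt n th /\
     2 * t = block_mid n + (th + / 4) * (/ INR n - block_mid n)).
Proof.
  intros [Ht0 Ht1] x. unfold x, detour_loop. destruct Rle_dec.
  - unfold outward_path. destruct Rle_dec; [left; simpl; split; auto; left; lra|].
    destruct (block_index_range (2 * t) ltac:(lra)) as [Hn Hr].
    destruct (block_path_cases _ _ Hn Hr) as [[E [Eu|Eu]]|[E [th Hth]]].
    + left. split; auto. left. lra.
    + left. split; auto. right; left. lra.
    + right. split; auto. eauto.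
  - left. cbn [fst snd]. split; auto. right; right; left. lra.
Qed.

Lemma detour_loop_inj_off_segment t1 t2 : unit_I t1 -> unit_I t2 ->
  snd (detour_loop t1) <> 0 -> detour_loop t1 = detour_loop t2 -> t1 = t2.
Proof.
  intros H1 H2 Hs E.
  destruct (detour_loop_cases t1 H1) as [[? _]|[_ [n1 [th1 [A1 [T1 [C1 E1]]]]]]]; [contradiction|].
  destruct (detour_loop_cases t2 H2) as [[? _]|[_ [n2 [th2 [A2 [T2 [C2 E2]]]]]]]; [congruence|].
  rewrite E in C1. rewrite C1 in C2.
  assert (n1 = n2).
  { destruct (Nat.eq_dec n1 n2) as [e|e]; auto. exfalso.
    pose proof (A_large n1 A1). pose proof (A_large n2 A2).
    apply (circles_disjoint n1 n2 (circle_pt n2 th2)); [lia|lia|lia|apply dist2_circle_pt|].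
    rewrite <- C2. apply dist2_circle_pt. }
  subst n2. rewrite (circle_pt_inj n1 th1 th2) in E1 by auto. lra.
Qed.

Lemma finite_fibres_detour_loop : finite_fibres detour_loop.
Proof.
  intros p. destruct (Req_dec (snd p) 0) as [Hp|Hp].
  - exists (fst p / 2 :: (fst p + / INR (S (block_index (fst p)))) / 4 :: 1 - fst p / 2 :: nil).
    intros t Ht Hk. subst p.
    destruct (detour_loop_cases t Ht) as [[_ H]|[H _]]; [exact H|contradiction].
  - destruct (finite_of_subsingleton (fun t => unit_I t /\ detour_loop t = p)) as [l Hl].
    { intros t1 t2 [H1 K1] [H2 K2]. apply detour_loop_inj_off_segment; auto; congruence. }
    exists l. intros t Ht Hk. apply Hl. auto.
Qed.

Lemma omega_loop_detour_loop : omega_loop detour_loop.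
Proof. split; [exact loopW_detour_loop|exact finite_fibres_detour_loop]. Qed.

Definition detour_angle (n : nat) (t : R) : R :=
  if A n then - (PI / 2) + 2 * PI * clamp01 (block_param n (2 * t)) else - (PI / 2).

Lemma circle_chart_detour_loop_off n t : (8 <= n)%nat -> unit_I t ->
  ~ (A n = true /\ block_mid n < 2 * t < / INR n) ->
  circle_chart n (detour_loop t) = (0, -1).
Proof.
  intros Hn Ht Hout. pose proof (block_mid_bounds n ltac:(lia)).
  destruct (detour_loop_cases t Ht) as [[E _]|[Hne [n' [th [A' [T' [C' E']]]]]]];
    [apply circle_chart_segment; auto|].
  rewrite C'. destruct (Nat.eq_dec n' n) as [->|e].
  - exfalso. destruct (Req_dec (2 * t) (/ INR n)) as [E|E].
    + assert (th = 3 / 4) by nra. subst th.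
      rewrite C', circle_pt_end in Hne. apply Hne. reflexivity.
    + apply Hout. split; auto. split; nra.
  - apply circle_chart_off, (circles_disjoint n n'); auto; [pose proof (A_large n' A'); lia|].
    apply dist2_circle_pt.
Qed.

Lemma circle_chart_detour_loop n t : (8 <= n)%nat -> unit_I t ->
  circle_chart n (detour_loop t) = expi (detour_angle n t).
Proof.
  intros Hn Ht. assert (Hn1 : (1 <= n)%nat) by lia.
  pose proof (block_mid_bounds n Hn1). pose proof (Rinv_INR_le1 n Hn1).
  destruct (classic (A n = true /\ block_mid n < 2 * t < / INR n)) as [[EA Hin]|Hout].
  - unfold detour_angle. rewrite EA.
    assert (Hp : 0 <= block_param n (2 * t) <= 1) by (apply block_param_range; auto; lra).
    assert (K : detour_loop t = circle_pt n (block_param n (2 * t) - / 4)).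
    { unfold detour_loop. destruct Rle_dec; [|lra]. rewrite (outward_path_block n); [|auto|lra].
      unfold block_path. rewrite EA. destruct Rle_dec; [lra|auto]. }
    rewrite K, circle_chart_circle_pt, clamp01_id by auto. f_equal. field.
  - rewrite circle_chart_detour_loop_off by auto. unfold detour_angle.
    destruct (A n) eqn:EA; [|symmetry; apply expi_bottom].
    destruct (Rle_dec (2 * t) (block_mid n)).
    + rewrite clamp01_le0 by (apply block_param_le0; auto).
      rewrite Rmult_0_r, Rplus_0_r. symmetry. apply expi_bottom.
    + assert (/ INR n <= 2 * t) by (apply Rnot_lt_le; intros ?; apply Hout; split; auto; lra).
      rewrite clamp01_ge1 by (apply block_param_ge1; auto). symmetry. apply expi_bottom_turn.
Qed.

Definition detour_angle_lip (n : nat) : R := 4 * PI / (/ INR n - block_mid n).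

Lemma detour_angle_lipschitz n t t' : (1 <= n)%nat ->
  Rabs (detour_angle n t - detour_angle n t') <= detour_angle_lip n * Rabs (t - t').
Proof.
  intros Hn. pose proof (block_mid_bounds n Hn). pose proof PI_RGT_0.
  unfold detour_angle, detour_angle_lip, block_param. set (d := / INR n - block_mid n) in *.
  assert (Hd : 0 < d) by (unfold d; lra).
  destruct (A n).
  - replace (- (PI / 2) + 2 * PI * clamp01 ((2 * t - block_mid n) / d) -
             (- (PI / 2) + 2 * PI * clamp01 ((2 * t' - block_mid n) / d)))
      with (2 * PI * (clamp01 ((2 * t - block_mid n) / d) - clamp01 ((2 * t' - block_mid n) / d)))
      by ring.
    rewrite Rabs_mult, (Rabs_right (2 * PI)) by lra.
    pose proof (clamp01_lipschitz ((2 * t - block_mid n) / d) ((2 * t' - block_mid n) / d)) as L.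
    replace ((2 * t - block_mid n) / d - (2 * t' - block_mid n) / d) with ((t - t') * (2 / d))
      in L by (field; lra).
    rewrite Rabs_mult, (Rabs_right (2 / d)) in L by (apply Rle_ge, Rdiv_le_0_compat; lra).
    replace (4 * PI / d * Rabs (t - t')) with (2 * PI * (Rabs (t - t') * (2 / d))) by (field; lra).
    apply Rmult_le_compat_l; lra.
  - rewrite Rminus_diag, Rabs_R0.
    apply Rmult_le_pos; [apply Rdiv_le_0_compat; lra|apply Rabs_pos].
Qed.

Lemma grid_unit_I i N : (1 <= N)%nat -> (i <= N)%nat -> unit_I (INR i / INR N).
Proof.
  intros HN Hi. pose proof (lt_0_INR N HN). split.
  - apply Rdiv_le_0_compat; auto. apply pos_INR.
  - apply Rmult_le_reg_r with (INR N); auto. unfold Rdiv.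
    rewrite Rmult_assoc, Rinv_l, Rmult_1_r, Rmult_1_l by lra. apply le_INR; auto.
Qed.

Lemma grid_step i N : (1 <= N)%nat -> INR (S i) / INR N - INR i / INR N = / INR N.
Proof. intros HN. pose proof (lt_0_INR N HN). rewrite S_INR. field. lra. Qed.

Lemma winding_sum_detour_loop n N : (8 <= n)%nat -> (1 <= N)%nat ->
  detour_angle_lip n * / INR N < PI / 2 ->
  winding_sum (fun i => circle_chart n (detour_loop (INR i / INR N))) N =
  if A n then 2 * PI else 0.
Proof.
  intros Hn HN HL. assert (Hn1 : (1 <= n)%nat) by lia. pose proof (lt_0_INR N HN).
  rewrite (winding_sum_ext _ (fun i => expi (detour_angle n (INR i / INR N))))
    by (intros; apply circle_chart_detour_loop, grid_unit_I; auto).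
  rewrite winding_sum_expi.
  - replace (INR N / INR N) with 1 by (field; lra).
    replace (INR 0 / INR N) with 0 by (simpl; field; lra).
    pose proof (block_mid_bounds n Hn1). pose proof (Rinv_INR_le1 n Hn1).
    pose proof (Rinv_INR_S_lt n Hn1). unfold detour_angle. destruct (A n); [|ring].
    rewrite clamp01_ge1 by (apply block_param_ge1; auto; lra).
    rewrite clamp01_le0 by (apply block_param_le0; auto; lra). ring.
  - intros i Hi. eapply Rle_lt_trans; [apply detour_angle_lipschitz; auto|].
    rewrite grid_step, Rabs_right by (auto; left; apply Rinv_0_lt_compat; auto). auto.
Qed.

End DetourLoop.

(** * Homotopy invariance of the winding numbers *)

Lemma winding_sum_homotopic n k1 k2 : (8 <= n)%nat -> homotopic k1 k2 ->
  exists del, del > 0 /\ forall N, (1 <= N)%nat -> / INR N < del ->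
    winding_sum (fun i => circle_chart n (k1 (INR i / INR N))) N =
    winding_sum (fun i => circle_chart n (k2 (INR i / INR N))) N.
Proof.
  intros Hn [H [Hc [HW [H0 [H1 Hend]]]]].
  destruct (circle_chart_unif n Hn (1 / 4) ltac:(lra)) as [dp [Hdp Gp]].
  destruct (cont_square_unif H Hc dp Hdp) as [del [Hdel GH]].
  exists del. split; auto. intros N HN HNd. pose proof (lt_0_INR N HN).
  set (row := fun j i => circle_chart n (H (INR j / INR N) (INR i / INR N))).
  assert (Hstep : forall j, Rabs (INR (S j) / INR N - INR j / INR N) < del)
    by (intros; rewrite grid_step, Rabs_right by (auto; left; apply Rinv_0_lt_compat; auto); auto).
  assert (Hsame : forall x, Rabs (x - x) < del) by (intros; rewrite Rminus_diag, Rabs_R0; auto).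
  assert (Hclose : forall j j' i i',
      (j <= N)%nat -> (j' <= N)%nat -> (i <= N)%nat -> (i' <= N)%nat ->
      Rabs (INR j' / INR N - INR j / INR N) < del -> Rabs (INR i' / INR N - INR i / INR N) < del ->
      dist2 (row j' i') (row j i) < 1 / 4).
  { intros j j' i i' Hj Hj' Hi Hi' Dj Di.
    apply Gp; try apply HW; try apply grid_unit_I; auto. apply GH; try apply grid_unit_I; auto. }
  assert (Hrow : forall j, (j < N)%nat -> winding_sum (row j) N = winding_sum (row (S j)) N).
  { intros j Hj. apply winding_sum_perturb.
    - intros; split; apply on_circle_circle_chart.
    - intros i Hi. split; apply Hclose; auto; lia.
    - intros i Hi. apply Hclose; auto; lia.
    - unfold row. replace (INR 0 / INR N) with 0 by (simpl; field; lra).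
      rewrite (proj1 (Hend _ (grid_unit_I j N HN ltac:(lia)))).
      rewrite (proj1 (Hend _ (grid_unit_I (S j) N HN ltac:(lia)))). reflexivity.
    - unfold row. replace (INR N / INR N) with 1 by (field; lra).
      rewrite (proj2 (Hend _ (grid_unit_I j N HN ltac:(lia)))).
      rewrite (proj2 (Hend _ (grid_unit_I (S j) N HN ltac:(lia)))). reflexivity. }
  assert (Hall : forall j, (j <= N)%nat -> winding_sum (row O) N = winding_sum (row j) N).
  { intros j Hj. induction j; auto. rewrite IHj by lia. apply Hrow. lia. }
  specialize (Hall N (le_n N)). unfold row in Hall.
  replace (INR 0 / INR N) with 0 in Hall by (simpl; field; lra).
  replace (INR N / INR N) with 1 in Hall by (field; lra).
  rewrite (winding_sum_ext _ (fun i => circle_chart n (k1 (INR i / INR N)))),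
          (winding_sum_ext (fun i => circle_chart n (H 1 _))
             (fun i => circle_chart n (k2 (INR i / INR N))))
    in Hall by (intros; rewrite ?H0, ?H1 by (apply grid_unit_I; auto); reflexivity).
  exact Hall.
Qed.

Lemma archimed_inv e : e > 0 -> exists N, (1 <= N)%nat /\ / INR N < e.
Proof.
  intros He. destruct (archimed_nat (/ e)) as [N [HN HK]]. exists N. split; auto.
  rewrite <- (Rinv_inv e). apply Rinv_0_lt_contravar; auto. apply Rinv_0_lt_compat; auto.
Qed.

Lemma detour_loops_not_homotopic A1 A2 n :
  (forall m, A1 m = true -> (8 <= m)%nat) -> (forall m, A2 m = true -> (8 <= m)%nat) ->
  (8 <= n)%nat -> A1 n <> A2 n -> ~ homotopic (detour_loop A1) (detour_loop A2).
Proof.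
  intros HA1 HA2 Hn Hne Hh. pose proof PI_RGT_0.
  destruct (winding_sum_homotopic n _ _ Hn Hh) as [del [Hdel Hw]].
  set (L := detour_angle_lip n).
  assert (HL : 0 < L).
  { pose proof (block_mid_bounds n ltac:(lia)). apply Rdiv_lt_0_compat; lra. }
  assert (He : 0 < Rmin del (PI / (2 * (L + 1))))
    by (apply Rmin_glb_lt; [lra|apply Rdiv_lt_0_compat; lra]).
  destruct (archimed_inv _ He) as [N [HN HNe]].
  pose proof (Rmin_l del (PI / (2 * (L + 1)))). pose proof (Rmin_r del (PI / (2 * (L + 1)))).
  assert (HNL : L * / INR N < PI / 2).
  { assert (0 < / INR N) by (apply Rinv_0_lt_compat, lt_0_INR; auto).
    assert (E : PI / (2 * (L + 1)) * (L + 1) = PI / 2) by (field; lra). nra. }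
  specialize (Hw N HN ltac:(lra)).
  rewrite !winding_sum_detour_loop in Hw by auto.
  destruct (A1 n), (A2 n); [congruence|lra|lra|congruence].
Qed.

(** * At least continuum many classes *)

Definition rat_enum (j : nat) : R :=
  let (a, bc) := Cantor.of_nat j in let (b, c) := Cantor.of_nat bc in (INR a - INR b) / INR (S c).

Lemma INR_Z_to_nat_diff m : INR (Z.to_nat m) - INR (Z.to_nat (- m)) = IZR m.
Proof.
  destruct (Z_le_gt_dec 0 m).
  - replace (Z.to_nat (- m)) with 0%nat by lia. rewrite INR_IZR_INZ, Z2Nat.id by auto. simpl. ring.
  - replace (Z.to_nat m) with 0%nat by lia. rewrite (INR_IZR_INZ (Z.to_nat (- m))), Z2Nat.id by lia.
    rewrite opp_IZR. simpl. ring.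
Qed.

Lemma rat_enum_dense x y : x < y -> exists j, x < rat_enum j < y.
Proof.
  intros Hxy. destruct (archimed_inv (y - x)) as [c [Hc Hcc]]; [lra|].
  pose proof (lt_0_INR c Hc). assert (Hc' : 0 < INR (S c)) by (apply lt_0_INR; lia).
  assert (/ INR (S c) <= / INR c) by (apply Rinv_le_contravar; rewrite ?S_INR; lra).
  destruct (archimed (x * INR (S c))) as [A1 A2]. set (m := up (x * INR (S c))) in *.
  exists (Cantor.to_nat (Z.to_nat m, Cantor.to_nat (Z.to_nat (- m), c))).
  unfold rat_enum. rewrite !Cantor.cancel_of_to, INR_Z_to_nat_diff.
  split; apply Rmult_lt_reg_r with (INR (S c)); auto; unfold Rdiv;
    rewrite Rmult_assoc, Rinv_l, Rmult_1_r by lra; [lra|].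
  assert (E : / INR (S c) * INR (S c) = 1) by (field; lra). nra.
Qed.

Definition cut_set (r : R) (n : nat) : bool :=
  if Nat.leb 8 n then (if Rlt_dec (rat_enum (n - 8)) r then true else false) else false.

Lemma cut_set_large r m : cut_set r m = true -> (8 <= m)%nat.
Proof.
  unfold cut_set. destruct (Nat.leb 8 m) eqn:E; [intros; apply Nat.leb_le; auto|discriminate].
Qed.

Lemma cut_set_separates r s : r < s -> exists n, (8 <= n)%nat /\ cut_set r n <> cut_set s n.
Proof.
  intros H. destruct (rat_enum_dense r s H) as [j [Hj1 Hj2]]. exists (j + 8)%nat. split; [lia|].
  unfold cut_set. replace (Nat.leb 8 (j + 8)) with true by (symmetry; apply Nat.leb_le; lia).
  replace (j + 8 - 8)%nat with j by lia.
  destruct (Rlt_dec (rat_enum j) r), (Rlt_dec (rat_enum j) s); try lra; discriminate.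
Qed.

Lemma continuum_many_classes : exists f : R -> (R -> pt),
  (forall r, in_Pomega (f r)) /\ (forall r s, homotopic (f r) (f s) -> r = s).
Proof.
  exists (fun r => detour_loop (cut_set r)). split.
  - intros r. apply Pom_gen, omega_loop_detour_loop, cut_set_large.
  - intros r s Hh. destruct (Rtotal_order r s) as [Hl|[He|Hg]]; auto; exfalso.
    + destruct (cut_set_separates r s Hl) as [n [Hn Hne]].
      exact (detour_loops_not_homotopic _ _ n (cut_set_large r) (cut_set_large s) Hn Hne Hh).
    + destruct (cut_set_separates s r Hg) as [n [Hn Hne]].
      exact (detour_loops_not_homotopic _ _ n (cut_set_large r) (cut_set_large s) Hn
               (not_eq_sym Hne) Hh).
Qed.

(** * At most continuum many classes *)

Lemma loopW_in_Pomega k : in_Pomega k -> loopW k.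
Proof.
  induction 1 as [k Hk| |k1 k2 _ [C1 [W1 [A1 B1]]] _ [C2 [W2 [A2 B2]]]|k _ [C [Wk [A0 B0]]]|].
  - apply Hk.
  - split; [apply cont_on_const|]. split; [intros; right; simpl; lra|split; reflexivity].
  - split; [|split; [|split]]; unfold Defs.concat.
    + apply (cont_on_paste 0 (/ 2) 1); try lra.
      * apply cont_on_ext with (fun t => k1 (2 * t + 0));
          [|apply cont_on_affine; auto; intros; lra].
        intros x Hx. destruct Rle_dec; [|lra]. f_equal; ring.
      * apply cont_on_ext with (fun t => k2 (2 * t + -1));
          [|apply cont_on_affine; auto; intros; lra].
        intros x Hx. destruct Rle_dec.
        -- assert (x = / 2) by lra. subst x. replace (2 * / 2) with 1 by field.
           replace (1 + -1) with 0 by ring. congruence.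
        -- f_equal; ring.
    + intros t [Ht0 Ht1]. destruct Rle_dec; [apply W1|apply W2]; split; lra.
    + destruct Rle_dec; [|lra]. rewrite Rmult_0_r. auto.
    + destruct Rle_dec; [lra|]. replace (2 * 1 - 1) with 1 by ring. auto.
  - split; [|split; [|split]]; unfold reverse.
    + apply cont_on_ext with (fun t => k (-1 * t + 1)); [intros; f_equal; ring|].
      apply cont_on_affine; auto. intros; lra.
    + intros t [Ht0 Ht1]. apply Wk. split; lra.
    + rewrite Rminus_0_r. auto.
    + rewrite Rminus_diag. auto.
  - auto.
Qed.

Lemma rat_enum_dense_01 t d : 0 <= t <= 1 -> d > 0 ->
  exists j, 0 <= rat_enum j <= 1 /\ Rabs (rat_enum j - t) < d.
Proof.
  intros Ht Hd. destruct (Rlt_dec t 1).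
  - destruct (rat_enum_dense t (Rmin (t + d) 1)) as [j [Hj1 Hj2]]; [apply Rmin_glb_lt; lra|].
    pose proof (Rmin_l (t + d) 1). pose proof (Rmin_r (t + d) 1).
    exists j. split; [lra|apply Rabs_lt_between; lra].
  - destruct (rat_enum_dense (Rmax (1 - d) 0) 1) as [j [Hj1 Hj2]]; [apply Rmax_lub_lt; lra|].
    pose proof (Rmax_l (1 - d) 0). pose proof (Rmax_r (1 - d) 0).
    exists j. split; [lra|apply Rabs_lt_between; lra].
Qed.

Lemma cont_on_eq_from_rat k1 k2 : cont_on 0 1 k1 -> cont_on 0 1 k2 ->
  (forall j, k1 (rat_enum j) = k2 (rat_enum j)) -> forall t, unit_I t -> k1 t = k2 t.
Proof.
  intros C1 C2 Hq t Ht. apply dist2_eq0.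
  apply Rle_antisym; [|apply dist2_ge0]. apply Rnot_lt_le. intros Hpos.
  set (e := dist2 (k1 t) (k2 t) / 3).
  destruct (C1 t Ht e ltac:(unfold e; lra)) as [d1 [Hd1 G1]].
  destruct (C2 t Ht e ltac:(unfold e; lra)) as [d2 [Hd2 G2]].
  destruct (rat_enum_dense_01 t (Rmin d1 d2) Ht ltac:(apply Rmin_glb_lt; lra)) as [j [Hj Hjt]].
  pose proof (Rmin_l d1 d2). pose proof (Rmin_r d1 d2).
  specialize (G1 (rat_enum j) Hj ltac:(lra)). specialize (G2 (rat_enum j) Hj ltac:(lra)).
  pose proof (dist2_triangle (k1 t) (k1 (rat_enum j)) (k2 t)).
  pose proof (dist2_triangle (k1 (rat_enum j)) (k2 (rat_enum j)) (k2 t)).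
  assert (dist2 (k1 (rat_enum j)) (k2 (rat_enum j)) = 0) by (rewrite Hq; apply dist2_refl).
  pose proof (dist2_sym (k1 t) (k1 (rat_enum j))). unfold e in *. lra.
Qed.

Lemma homotopic_of_eq k1 k2 : loopW k1 -> (forall t, unit_I t -> k1 t = k2 t) -> homotopic k1 k2.
Proof.
  intros [C [HW [A B]]] E. exists (fun s t => k1 t). split; [|split; [|split; [|split]]]; auto.
  intros s t Hs Ht eps Heps. destruct (C t Ht eps Heps) as [d [Hd G]]. exists d. split; auto.
  intros s' t' Hs' Ht' Hdd. apply G; auto.
  pose proof (dist2_ge_abs_snd (s', t') (s, t)). simpl in *. lra.
Qed.

Definition coord (e : nat) (p : pt) : R := match e with O => fst p | _ => snd p end.

Definition rat_code (k : R -> pt) (j : nat) : bool :=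
  let (a, ce) := Cantor.of_nat j in let (c, e) := Cantor.of_nat ce in
  if Rlt_dec (rat_enum c) (coord e (k (rat_enum a))) then true else false.

Lemma rat_code_inj k1 k2 : (forall j, rat_code k1 j = rat_code k2 j) ->
  forall a, k1 (rat_enum a) = k2 (rat_enum a).
Proof.
  intros H a.
  assert (Hc : forall e, coord e (k1 (rat_enum a)) = coord e (k2 (rat_enum a))).
  { intros e. set (v1 := coord e (k1 (rat_enum a))). set (v2 := coord e (k2 (rat_enum a))).
    assert (Hsep : forall x y, x < y -> exists c, x < rat_enum c < y) by apply rat_enum_dense.
    destruct (Rtotal_order v1 v2) as [Hl|[He|Hg]]; auto; exfalso;
      [destruct (Hsep v1 v2 Hl) as [c [Hc1 Hc2]]|destruct (Hsep v2 v1 Hg) as [c [Hc1 Hc2]]];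
      specialize (H (Cantor.to_nat (a, Cantor.to_nat (c, e))));
      unfold rat_code in H; rewrite !Cantor.cancel_of_to in H; fold v1 v2 in H;
      destruct (Rlt_dec (rat_enum c) v1), (Rlt_dec (rat_enum c) v2); try lra; discriminate. }
  pose proof (Hc O) as E0. pose proof (Hc 1%nat) as E1. simpl in E0, E1.
  destruct (k1 (rat_enum a)), (k2 (rat_enum a)). simpl in *. congruence.
Qed.

Definition ternary_digit (b : nat -> bool) (j : nat) : R := if b j then / 3 ^ S j else 0.
Definition ternary_partial (b : nat -> bool) (N : nat) : R := rsum (ternary_digit b) N.

Lemma pow3_pos k : 0 < 3 ^ k.
Proof. apply pow_lt; lra. Qed.

Lemma ternary_digit_bounds b j : 0 <= ternary_digit b j <= / 3 ^ S j.
Proof.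
  unfold ternary_digit. assert (0 < / 3 ^ S j) by apply Rinv_0_lt_compat, pow3_pos.
  destruct (b j); lra.
Qed.

Lemma ternary_partial_tail b m k :
  ternary_partial b (m + k) - ternary_partial b m <= (/ 3 ^ m - / 3 ^ (m + k)) / 2.
Proof.
  induction k as [|k IH]; [rewrite Nat.add_0_r; lra|].
  rewrite Nat.add_succ_r. unfold ternary_partial in *. simpl rsum.
  pose proof (ternary_digit_bounds b (m + k)).
  assert (E : / 3 ^ S (m + k) = / 3 ^ (m + k) / 3) by (simpl; field; apply Rgt_not_eq, pow3_pos).
  rewrite E in *. lra.
Qed.

Lemma ternary_partial_mono b N M : (N <= M)%nat -> ternary_partial b N <= ternary_partial b M.
Proof.
  induction 1; [lra|]. unfold ternary_partial in *. simpl.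
  pose proof (ternary_digit_bounds b m). lra.
Qed.

Lemma ternary_partial_le1 b N : ternary_partial b N <= 1.
Proof.
  pose proof (ternary_partial_tail b 0 N). simpl in H.
  assert (0 < / 3 ^ N) by apply Rinv_0_lt_compat, pow3_pos.
  unfold ternary_partial in *. simpl in *. lra.
Qed.

Lemma ternary_partial_bound b : bound (fun x => exists N, x = ternary_partial b N).
Proof. exists 1. intros x [N ->]. apply ternary_partial_le1. Qed.

Lemma ternary_partial_inhabited b : exists x, exists N, x = ternary_partial b N.
Proof. exists (ternary_partial b 0), 0%nat. auto. Qed.

Definition ternary_real (b : nat -> bool) : R :=
  proj1_sig (completeness _ (ternary_partial_bound b) (ternary_partial_inhabited b)).

Lemma ternary_partial_le_real b N : ternary_partial b N <= ternary_real b.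
Proof.
  unfold ternary_real. destruct completeness as [m [H1 H2]]. simpl. apply H1. exists N; auto.
Qed.

Lemma ternary_real_le b c : (forall N, ternary_partial b N <= c) -> ternary_real b <= c.
Proof.
  intros H. unfold ternary_real. destruct completeness as [m [H1 H2]]. simpl.
  apply H2. intros x [N ->]. auto.
Qed.

Lemma first_difference (b b' : nat -> bool) j : b j <> b' j ->
  exists j0, b j0 <> b' j0 /\ forall i, (i < j0)%nat -> b i = b' i.
Proof.
  induction j as [j IH] using lt_wf_ind. intros H.
  destruct (classic (exists i, (i < j)%nat /\ b i <> b' i)) as [[i [Hi Hb]]|N];
    [apply (IH i Hi Hb)|].
  exists j. split; auto. intros i Hi. destruct (Bool.bool_dec (b i) (b' i)); auto.
  exfalso. apply N. eauto.
Qed.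

(* The digits after [j0] add up to at most half of digit [j0]. *)
Lemma ternary_real_lt b b' j0 : b j0 = true -> b' j0 = false ->
  (forall i, (i < j0)%nat -> b i = b' i) -> ternary_real b' < ternary_real b.
Proof.
  intros Hb Hb' Hpre.
  assert (EA : ternary_partial b j0 = ternary_partial b' j0)
    by (apply rsum_ext; intros i Hi; unfold ternary_digit; rewrite Hpre; auto).
  set (P := ternary_partial b j0) in *.
  assert (Hd : 0 < / 3 ^ S j0) by apply Rinv_0_lt_compat, pow3_pos.
  assert (L : P + / 3 ^ S j0 <= ternary_real b).
  { pose proof (ternary_partial_le_real b (S j0)) as Hle.
    change (ternary_partial b (S j0)) with (P + ternary_digit b j0) in Hle.
    unfold ternary_digit in Hle. rewrite Hb in Hle. exact Hle. }
  assert (U : ternary_real b' <= P + / 3 ^ S j0 / 2).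
  { apply ternary_real_le. intros N. destruct (le_lt_dec N j0) as [HN|HN].
    - pose proof (ternary_partial_mono b' N j0 HN). lra.
    - pose proof (ternary_partial_tail b' (S j0) (N - S j0)) as T.
      replace (S j0 + (N - S j0))%nat with N in T by lia.
      assert (ternary_partial b' (S j0) = P).
      { change (ternary_partial b' (S j0)) with (ternary_partial b' j0 + ternary_digit b' j0).
        unfold ternary_digit. rewrite Hb'. lra. }
      assert (0 < / 3 ^ N) by apply Rinv_0_lt_compat, pow3_pos. lra. }
  lra.
Qed.

Lemma ternary_real_inj b b' : ternary_real b = ternary_real b' -> forall j, b j = b' j.
Proof.
  intros Heq j. destruct (Bool.bool_dec (b j) (b' j)) as [e|e]; auto. exfalso.
  destruct (first_difference b b' j e) as [j0 [Hd Hpre]].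
  destruct (b j0) eqn:E1, (b' j0) eqn:E2; try congruence.
  - pose proof (ternary_real_lt b b' j0 E1 E2 Hpre). lra.
  - pose proof (ternary_real_lt b' b j0 E2 E1 (fun i Hi => eq_sym (Hpre i Hi))). lra.
Qed.

Lemma at_most_continuum_classes : exists g : (R -> pt) -> R,
  forall k1 k2, in_Pomega k1 -> in_Pomega k2 -> g k1 = g k2 -> homotopic k1 k2.
Proof.
  exists (fun k => ternary_real (rat_code k)). intros k1 k2 H1 H2 E.
  pose proof (loopW_in_Pomega k1 H1) as L1. pose proof (loopW_in_Pomega k2 H2) as L2.
  apply homotopic_of_eq; auto. apply cont_on_eq_from_rat; [apply L1|apply L2|].
  apply rat_code_inj, ternary_real_inj, E.
Qed.

Theorem lemma12p2 :
  (exists f : R -> (R -> pt),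
     (forall r, in_Pomega (f r)) /\
     (forall r s, homotopic (f r) (f s) -> r = s)) /\
  (exists g : (R -> pt) -> R,
     forall k1 k2, in_Pomega k1 -> in_Pomega k2 ->
       g k1 = g k2 -> homotopic k1 k2).
Proof.
  split; [exact continuum_many_classes|exact at_most_continuum_classes].
Qed.
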